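(* For $i\in\{1,2\}$ let $\mathcal{P}_i=\mathrm{con}(\mathcal{C}_i)=\mathrm{gen}(\mathcal{G}_i)\subseteq\mathbb{R}^n$ be non-empty NNC polyhedra, with $\mathcal{C}_i$ finite constraint systems and $\mathcal{G}_i=(R_i,P_i,C_i)$ extended generator systems. Then $\mathcal{P}_1\uplus\mathcal{P}_2\neq\mathcal{P}_1\cup\mathcal{P}_2$ if and only if, for some $i,j\in\{1,2\}$ with $i\neq j$, there exists a generator $g_i$ of $\mathcal{G}_i$ that saturates a constraint $\beta_i\in\mathcal{C}_i$ violated by $\mathcal{P}_j$, and at least one of the following holds: (1) $g_i$ is a ray or a closure point of $\mathcal{G}_i$ (i.e., $g_i\in R_i$ or $g_i\in C_i$) that is not subsumed by $\mathcal{P}_j$; (2) $g_i$ is a point of $\mathcal{G}_i$ (i.e., $g_i\in P_i$), $\beta_i$ is non-strict, and $g_i\notin\mathbb{C}(\mathcal{P}_j)$; (3) $\beta_i$ is strict and is saturated by some point $\mathbf{p}\in(\mathcal{P}_1\uplus\mathcal{P}_2)\setminus\mathcal{P}_j$.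
   Context: A constraint is either a non-strict inequality $\langle\mathbf{a},\mathbf{x}\rangle\le b$ or a strict inequality $\langle\mathbf{a},\mathbf{x}\rangle<b$, with $\mathbf{a}\in\mathbb{R}^n\setminus\{\mathbf{0}\}$, $b\in\mathbb{R}$ (equalities being treated as pairs of non-strict inequalities). For a finite set $\mathcal{C}$ of constraints, $\mathrm{con}(\mathcal{C})$ is the set of points of $\mathbb{R}^n$ satisfying all of them; such sets are the NNC (not necessarily closed) polyhedra. An extended generator system is a triple $(R,P,C)$ of finite subsets of $\mathbb{R}^n$, $R=\{\mathbf{r}_k\}$, $P=\{\mathbf{p}_k\}$, $C=\{\mathbf{c}_k\}$, with $\mathbf{0}\notin R$, and $\mathrm{gen}((R,P,C))=\{\sum\rho_k\mathbf{r}_k+\sum\sigma_k\mathbf{p}_k+\sum\tau_k\mathbf{c}_k : \rho_k,\sigma_k,\tau_k\ge0,\ (\sigma_k)_k\neq\mathbf{0},\ \sum\sigma_k+\sum\tau_k=1\}$; elements of $R$, $P$, $C$ are called rays, points and closure points of the system, respectively. $\mathbb{C}(S)$ denotes the topological closure of $S$. For a non-empty NNC polyhedron $\mathcal{P}$, a vector $\mathbf{r}\neq\mathbf{0}$ is a ray of $\mathcal{P}$ if $\mathbf{p}+\rho\mathbf{r}\in\mathcal{P}$ for all $\mathbf{p}\in\mathcal{P}$, $\rho\ge0$; a vector $\mathbf{c}$ is a closure point of $\mathcal{P}$ if $\mathbf{c}\in\mathbb{C}(\mathcal{P})$. A polyhedron $\mathcal{P}$ subsumes a point (resp. ray, closure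 point) $\mathbf{v}$ if $\mathbf{v}$ is a point in $\mathcal{P}$ (resp. a ray of $\mathcal{P}$, a closure point of $\mathcal{P}$). A point or closure point $\mathbf{p}$ saturates a constraint $\langle\mathbf{a},\mathbf{x}\rangle\bowtie b$ ($\bowtie\in\{<,\le\}$) if $\langle\mathbf{a},\mathbf{p}\rangle=b$; a ray $\mathbf{r}$ saturates it if $\langle\mathbf{a},\mathbf{r}\rangle=0$. A polyhedron violates a constraint if some point of it does not satisfy it. $\mathcal{P}_1\uplus\mathcal{P}_2$ is the smallest NNC polyhedron containing $\mathcal{P}_1\cup\mathcal{P}_2$; if $\mathcal{P}_i=\mathrm{gen}((R_i,P_i,C_i))$ then $\mathcal{P}_1\uplus\mathcal{P}_2=\mathrm{gen}((R_1\cup R_2,P_1\cup P_2,C_1\cup C_2))$. *)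

From HB Require Import structures.
From mathcomp Require Import all_boot all_order all_algebra.
From mathcomp Require Import all_classical all_reals all_analysis.
Set Implicit Arguments. Unset Strict Implicit. Unset Printing Implicit Defensive.
Import Order.TTheory GRing.Theory Num.Theory.
Import numFieldNormedType.Exports.
Local Open Scope classical_set_scope.
Local Open Scope ring_scope.

Section NNC.
Variables (R : realType) (n : nat).
Notation vec := 'rV[R]_n.

Definition dotp (a x : vec) : R := \sum_(k < n) a 0 k * x 0 k.

(* a constraint (a, b, strict): <a,x> < b if strict, <a,x> <= b otherwise *)
Definition constraint : Type := (vec * R * bool)%type.
Definition ca (c : constraint) : vec := c.1.1.
Definition cb (c : constraint) : R := c.1.2.
Definition cstrict (c : constraint) : bool := c.2.

Definition wf_constraint (c : constraint) : Prop := ca c != 0.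

Definition sat_constraint (x : vec) (c : constraint) : Prop :=
  if cstrict c then dotp (ca c) x < cb c else dotp (ca c) x <= cb c.

Definition con (C : seq constraint) : set vec :=
  [set x | forall c, c \in C -> sat_constraint x c].

Definition is_NNC (Q : set vec) : Prop :=
  exists C : seq constraint, (forall c, c \in C -> wf_constraint c) /\ Q = con C.

Record gensys := Gensys { grays : seq vec; gpoints : seq vec; gcpoints : seq vec }.

Definition wf_gensys (G : gensys) : Prop := (0 : vec) \notin grays G.

Definition gen (G : gensys) : set vec :=
  [set x | exists (rho : 'I_(size (grays G)) -> R)
                  (sigma : 'I_(size (gpoints G)) -> R)
                  (tau : 'I_(size (gcpoints G)) -> R),
     [/\ (forall k, 0 <= rho k), (forall k, 0 <= sigma k) /\ (forall k, 0 <= tau k),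
         (exists k, sigma k != 0),
         \sum_k sigma k + \sum_k tau k = 1 &
         x = \sum_k rho k *: (grays G)`_k + \sum_k sigma k *: (gpoints G)`_k
             + \sum_k tau k *: (gcpoints G)`_k]].

Inductive gkind := GRay | GPoint | GClosure.

Definition in_gensys (G : gensys) (k : gkind) (g : vec) : bool :=
  match k with
  | GRay => g \in grays G
  | GPoint => g \in gpoints G
  | GClosure => g \in gcpoints G
  end.

Definition is_ray_of (Q : set vec) (r : vec) : Prop :=
  r != 0 /\ forall p rho, Q p -> 0 <= rho -> Q (p + rho *: r).

Definition is_closure_point_of (Q : set vec) (c : vec) : Prop := closure Q c.

Definition subsumes (Q : set vec) (k : gkind) (v : vec) : Prop :=
  match k with
  | GRay => is_ray_of Q v
  | GPoint => Q v
  | GClosure => is_closure_point_of Q v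
  end.

Definition saturates (k : gkind) (v : vec) (c : constraint) : Prop :=
  match k with
  | GRay => dotp (ca c) v = 0
  | GPoint | GClosure => dotp (ca c) v = cb c
  end.

Definition violates (Q : set vec) (c : constraint) : Prop :=
  exists p, Q p /\ ~ sat_constraint p c.

Definition poly_hull (P1 P2 : set vec) : set vec :=
  [set x | forall Q, is_NNC Q -> P1 `|` P2 `<=` Q -> Q x].

Definition hull_cond (Pi : set vec) (Ci : seq constraint) (Gi : gensys)
    (Pj : set vec) (H : set vec) : Prop :=
  exists (k : gkind) (g : vec) (beta : constraint),
    [/\ in_gensys Gi k g, beta \in Ci, saturates k g beta, violates Pj beta &
     [\/ ((k = GRay \/ k = GClosure) /\ ~ subsumes Pj k g),
         (k = GPoint /\ ~~ cstrict beta /\ ~ closure Pj g)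
       | (cstrict beta /\
          exists p, H p /\ ~ Pj p /\ dotp (ca beta) p = cb beta)]].

End NNC.

(* If a witness exists, a point of the hull outside P1 u P2 is found far along the ray,
   near the closure point or point on the segment towards a point of Pj violating the
   facet, or is the given point p.  Otherwise P1 u P2 is convex: on a segment from Pi to
   Pj, the first facet of Pi crossed is saturated by the crossing point, which is a
   combination of generators on that facet; if the facet is non-strict these lie in the
   closure of Pj (or are rays of Pj), if it is strict the crossing point lies in Pj
   itself.  The union is similarly stable under adding rays and moving towards closure
   points of both generator systems, so it contains gen(G1 u G2), which Fourier-Motzkin
   elimination shows to be an NNC polyhedron containing P1 u P2. *)

From mathcomp Require Import all_boot all_order all_algebra.
From mathcomp Require Import all_classical all_reals all_analysis.
From mathcomp.algebra_tactics Require Import ring lra.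
From mathcomp Require Import zify.
Import Order.TTheory GRing.Theory Num.Theory.
Import numFieldNormedType.Exports.
Set Implicit Arguments. Unset Strict Implicit. Unset Printing Implicit Defensive.
Local Open Scope classical_set_scope.
Local Open Scope ring_scope.

Section Dotp.
Variables (R : realType) (n : nat).
Notation vec := 'rV[R]_n.
Implicit Types (a x y : vec).

Lemma dotpDr a x y : dotp a (x + y) = dotp a x + dotp a y.
Proof. by rewrite /dotp -big_split /=; apply: eq_bigr => k _; rewrite mxE mulrDr. Qed.

Lemma dotpZr a x k : dotp a (k *: x) = k * dotp a x.
Proof. by rewrite /dotp mulr_sumr; apply: eq_bigr => i _; rewrite mxE mulrCA. Qed.

Lemma dotpDl a a' x : dotp (a + a') x = dotp a x + dotp a' x.
Proof. by rewrite /dotp -big_split /=; apply: eq_bigr => k _; rewrite mxE mulrDl. Qed.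

Lemma dotpZl a x k : dotp (k *: a) x = k * dotp a x.
Proof. by rewrite /dotp mulr_sumr; apply: eq_bigr => i _; rewrite mxE mulrA. Qed.

Lemma dotp0r a : dotp a 0 = 0.
Proof. by rewrite /dotp big1 // => i _; rewrite mxE mulr0. Qed.

Lemma dotp0l x : dotp 0 x = 0.
Proof. by rewrite /dotp big1 // => i _; rewrite mxE mul0r. Qed.

Lemma dotpNr a x : dotp a (- x) = - dotp a x.
Proof. by rewrite -scaleN1r dotpZr mulN1r. Qed.

Lemma dotpNl a x : dotp (- a) x = - dotp a x.
Proof. by rewrite -scaleN1r dotpZl mulN1r. Qed.

Lemma dotpBr a x y : dotp a (x - y) = dotp a x - dotp a y.
Proof. by rewrite dotpDr dotpNr. Qed.

Lemma dotp_sumr a m p (F : nat -> vec) :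
  dotp a (\sum_(m <= i < p) F i) = \sum_(m <= i < p) dotp a (F i).
Proof. by apply: (big_morph (dotp a)); [exact: dotpDr | exact: dotp0r]. Qed.

Lemma dotp_delta_mx (k : 'I_n) x : dotp (delta_mx 0 k) x = x 0 k.
Proof.
rewrite /dotp (bigD1 k) //= big1 ?addr0; first by rewrite mxE !eqxx mul1r.
by move=> j /negbTE jk; rewrite mxE jk andbF mul0r.
Qed.

Lemma dotp_convex a x y t :
  dotp a ((1 - t) *: x + t *: y) = (1 - t) * dotp a x + t * dotp a y.
Proof. by rewrite dotpDr !dotpZr. Qed.

End Dotp.

Section Ineq.
Variable R : realType.
Implicit Types (A B C b s t v : R).

Definition ineq (st : bool) (x y : R) : Prop := if st then x < y else x <= y.

Lemma ineqW st x y : ineq st x y -> x <= y.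
Proof. by rewrite /ineq; case: st => // /ltW. Qed.

Lemma le_ineq_trans st x y z : x <= y -> ineq st y z -> ineq st x z.
Proof. by rewrite /ineq; case: st => [/le_lt_trans|/le_trans]; apply. Qed.

Lemma ineq_addpM st v e t b : 0 < e -> ineq st t ((b - v) / e) -> ineq st (v + e * t) b.
Proof.
move=> e0; rewrite /ineq; case: st => H.
  by rewrite -ltrBrDl mulrC -ltr_pdivlMr.
by rewrite -lerBrDl mulrC -ler_pdivlMr.
Qed.

Lemma ineq_addnM st v e t b : e < 0 -> ineq st ((b - v) / e) t -> ineq st (v + e * t) b.
Proof.
move=> e0; rewrite /ineq; case: st => H.
  by rewrite -ltrBrDl mulrC -ltr_ndivrMr.
by rewrite -lerBrDl mulrC -ler_ndivrMr.
Qed.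

Lemma ineq_convex st A B b t : 0 <= t <= 1 -> ineq st A b -> ineq st B b ->
  ineq st ((1 - t) * A + t * B) b.
Proof.
move=> /andP[t0 t1]; rewrite /ineq; case: st => hA hB; last by nra.
have -> : b = (1 - t) * b + t * b by ring.
have [->|tn0] := eqVneq t 0; first by rewrite subr0 !mul1r !mul0r !addr0.
apply: ler_ltD; first by apply: ler_wpM2l; rewrite ?subr_ge0 // ltW.
by rewrite ltr_pM2l // lt0r tn0.
Qed.

Lemma ineq_convex_le st A B b t : A <= b -> ineq st B b -> 0 < t <= 1 ->
  ineq st ((1 - t) * A + t * B) b.
Proof.
move=> hA; rewrite /ineq; case: st => hB /andP[t0 t1]; last by nra.
have -> : b = (1 - t) * b + t * b by ring.
by apply: ler_ltD; [apply: ler_wpM2l; rewrite ?subr_ge0 | rewrite ltr_pM2l].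
Qed.

End Ineq.

Section SeqExtremum.
Variables (R : realType) (T : eqType).
Implicit Types (s : seq T) (f : T -> R).

Lemma seq_argmin s f : s != [::] -> exists2 c, c \in s & forall d, d \in s -> f c <= f d.
Proof.
elim: s => // a s IH _; have [->|sn] := eqVneq s [::].
  by exists a; rewrite ?mem_seq1 // => d; rewrite mem_seq1 => /eqP ->.
have [c cs Hc] := IH sn; have [fac|fca] := leP (f a) (f c).
  exists a; first exact: mem_head.
  by move=> d; rewrite inE => /orP[/eqP->//|/Hc]; apply: le_trans.
exists c; first by rewrite inE cs orbT.
by move=> d; rewrite inE => /orP[/eqP->|/Hc//]; apply: ltW.
Qed.

Lemma seq_argmax s f : s != [::] -> exists2 c, c \in s & forall d, d \in s -> f d <= f c.
Proof.
move=> /(@seq_argmin _ (fun x => - f x)) [c cs Hc]; exists c => // d ds.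
by rewrite -lerN2 Hc.
Qed.

(* the one-variable core of Fourier-Motzkin elimination *)
Lemma ineq_between (Lo Up : seq T) (U : T -> R) (st : T -> bool) :
  (forall p q, p \in Up -> q \in Lo -> ineq (st p || st q) (U q) (U p)) ->
  exists t, (forall p, p \in Up -> ineq (st p) t (U p)) /\
            (forall q, q \in Lo -> ineq (st q) (U q) t).
Proof.
move=> pair; rewrite /ineq.
have [Up0|Upn] := eqVneq Up [::]; have [Lo0|Lon] := eqVneq Lo [::].
- by exists 0; rewrite Up0 Lo0.
- have [q qL Hq] := seq_argmax U Lon.
  by exists (U q + 1); rewrite Up0; split => // q' /Hq; case: (st q'); lra.
- have [p pU Hp] := seq_argmin U Upn.
  by exists (U p - 1); rewrite Lo0; split => // p' /Hp; case: (st p'); lra.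
have [q qL Hq] := seq_argmax U Lon; have [p pU Hp] := seq_argmin U Upn.
exists ((U q + U p) / 2); split.
  move=> p' pU'; have := Hp p' pU'; have := pair p' q pU' qL; rewrite /ineq.
  by case: (st p') => /=; [|case: (st q)]; lra.
move=> q' qL'; have := Hq q' qL'; have := pair p q' pU qL'; rewrite /ineq.
by case: (st q'); rewrite ?orbT; [|rewrite orbF; case: (st p)]; lra.
Qed.

End SeqExtremum.

Section FourierMotzkin.
Variables (R : realType) (n : nat).
Notation vec := 'rV[R]_n.

(* [(a, e, b, st)] stands for [<a, x> + \sum_i e i * z i < b] (or [<=] when [~~ st]),
   an inequality in [x] and auxiliary variables [z]. *)
Definition lineq := (vec * (nat -> R) * R * bool)%type.
Definition lq_x (c : lineq) : vec := c.1.1.1.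
Definition lq_z (c : lineq) : nat -> R := c.1.1.2.
Definition lq_b (c : lineq) : R := c.1.2.
Definition lq_strict (c : lineq) : bool := c.2.

Definition lq_val m (x : vec) (z : nat -> R) (c : lineq) :=
  dotp (lq_x c) x + \sum_(0 <= i < m) lq_z c i * z i.
Definition lq_sat m x z c := ineq (lq_strict c) (lq_val m x z c) (lq_b c).

Definition zupd (z : nat -> R) m t := fun i => if i == m then t else z i.

Lemma lq_val_ext m x z z' c : (forall i, (i < m)%N -> z i = z' i) ->
  lq_val m x z c = lq_val m x z' c.
Proof.
move=> zz'; congr (_ + _); apply: eq_big_nat => i /andP[_ im].
by rewrite zz'.
Qed.

Lemma lq_val_zupd m x z t c :
  lq_val m.+1 x (zupd z m t) c = lq_val m x z c + lq_z c m * t.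
Proof.
rewrite /lq_val big_nat_recr //= /zupd eqxx addrA; congr (_ + _ + _).
by apply: eq_big_nat => i /andP[_ im]; rewrite (ltn_eqF im).
Qed.

(* the positive combination of [p] and [q] in which the coefficient of [z m] cancels *)
Definition fm_comb m (p q : lineq) : lineq :=
  ((- lq_z q m) *: lq_x p + lq_z p m *: lq_x q,
   fun i => - lq_z q m * lq_z p i + lq_z p m * lq_z q i,
   - lq_z q m * lq_b p + lq_z p m * lq_b q, lq_strict p || lq_strict q).

Lemma lq_val_fm_comb m x z p q :
  lq_val m x z (fm_comb m p q) = - lq_z q m * lq_val m x z p + lq_z p m * lq_val m x z q.
Proof.
rewrite /lq_val /fm_comb /lq_x /lq_z /= dotpDl !dotpZl !mulrDr -!addrA; congr (_ + _).
rewrite addrCA; congr (_ + _).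
by rewrite !mulr_sumr -big_split /=; apply: eq_bigr => i _; rewrite mulrDl !mulrA.
Qed.

Section Pair.
Variables (m : nat) (p q : lineq).
Hypotheses (p_pos : 0 < lq_z p m) (q_neg : lq_z q m < 0).

Lemma ineq_fm_comb vp vq t :
  ineq (lq_strict p) (vp + lq_z p m * t) (lq_b p) ->
  ineq (lq_strict q) (vq + lq_z q m * t) (lq_b q) ->
  ineq (lq_strict (fm_comb m p q)) (- lq_z q m * vp + lq_z p m * vq) (lq_b (fm_comb m p q)).
Proof.
rewrite /ineq /fm_comb /lq_b /lq_strict /=.
move: p_pos q_neg; rewrite /lq_z; set a := p.1.1.2 m; set b := q.1.1.2 m => a0 b0.
have -> : - b * vp + a * vq = - b * (vp + a * t) + a * (vq + b * t) by ring.
have nb : 0 < - b by rewrite oppr_gt0.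
case: p.2; case: q.2 => /= Hp Hq.
- by apply: ltrD; rewrite ltr_pM2l.
- by apply: ltr_leD; [rewrite ltr_pM2l | rewrite ler_pM2l].
- by apply: ler_ltD; [rewrite ler_pM2l | rewrite ltr_pM2l].
- by apply: lerD; rewrite ler_pM2l.
Qed.

(* the solutions of [p] in [z m] are bounded above by [(b_p - vp) / e_p], those of [q]
   below by [(b_q - vq) / e_q]; [fm_comb] says the bounds are compatible *)
Lemma fm_comb_bounds vp vq :
  ineq (lq_strict (fm_comb m p q)) (- lq_z q m * vp + lq_z p m * vq) (lq_b (fm_comb m p q)) ->
  ineq (lq_strict p || lq_strict q)
    ((lq_b q - vq) / lq_z q m) ((lq_b p - vp) / lq_z p m).
Proof.
rewrite /ineq /fm_comb /lq_b /lq_strict /=.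
move: p_pos q_neg; rewrite /lq_z; set a := p.1.1.2 m; set b := q.1.1.2 m => a0 b0.
set D := (- b * p.1.2 + a * q.1.2) - (- b * vp + a * vq).
have E : (p.1.2 - vp) / a - (q.1.2 - vq) / b = D / (a * - b).
  by rewrite /D; field; rewrite (gt_eqF a0) (lt_eqF b0).
have ab0 : 0 < a * - b by rewrite mulr_gt0 // oppr_gt0.
case: (_ || _) => H; first by rewrite -subr_gt0 E divr_gt0 // subr_gt0.
by rewrite -subr_ge0 E divr_ge0 // ?subr_ge0 // ltW.
Qed.

End Pair.

Definition fm_step m (S : seq lineq) : seq lineq :=
  [seq c <- S | lq_z c m == 0] ++
  [seq fm_comb m p q | p <- [seq c <- S | 0 < lq_z c m], q <- [seq c <- S | lq_z c m < 0]].

Lemma fm_step_sound m S x z t :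
  (forall c, c \in S -> lq_sat m.+1 x (zupd z m t) c) ->
  forall c, c \in fm_step m S -> lq_sat m x z c.
Proof.
rewrite /lq_sat => Ht c; rewrite mem_cat => /orP[|].
  rewrite mem_filter => /andP[/eqP e0 cS]; have := Ht c cS.
  by rewrite lq_val_zupd e0 mul0r addr0.
case/allpairsP => -[p q] /= [+ + ->]; rewrite !mem_filter => /andP[ep pS] /andP[eq qS].
rewrite lq_val_fm_comb; apply: (@ineq_fm_comb _ _ _ _ _ _ _ t) => //;
  by rewrite -lq_val_zupd; apply: Ht.
Qed.

Lemma fm_step_complete m S x z :
  (forall c, c \in fm_step m S -> lq_sat m x z c) ->
  exists t, forall c, c \in S -> lq_sat m.+1 x (zupd z m t) c.
Proof.
rewrite /lq_sat => H.
set Up := [seq c <- S | 0 < lq_z c m]; set Lo := [seq c <- S | lq_z c m < 0].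
pose U c := (lq_b c - lq_val m x z c) / lq_z c m.
have [|t [tU tL]] := @ineq_between _ _ Lo Up U lq_strict.
  move=> p q; rewrite !mem_filter => /andP[ep pS] /andP[eq qS].
  apply: fm_comb_bounds => //; rewrite -lq_val_fm_comb; apply: H.
  by rewrite mem_cat; apply/orP; right; apply/allpairsP; exists (p, q); rewrite !mem_filter ?ep ?eq.
exists t => c cS; rewrite lq_val_zupd.
case: (ltgtP (lq_z c m) 0) => ec.
- by apply: ineq_addnM => //; apply: tL; rewrite mem_filter ec.
- by apply: ineq_addpM => //; apply: tU; rewrite mem_filter ec.
- by rewrite ec mul0r addr0; apply: H; rewrite mem_cat mem_filter ec eqxx cS.
Qed.

Fixpoint fm_elim m (S : seq lineq) : seq lineq :=
  if m is m'.+1 then fm_elim m' (fm_step m' S) else S.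

Lemma fm_elimP m S x :
  (exists z, forall c, c \in S -> lq_sat m x z c) <->
  (forall c, c \in fm_elim m S -> lq_sat 0 x (fun=> 0) c).
Proof.
elim: m S => [|m IH] S /=.
  split; last by move=> H; exists (fun=> 0).
  by move=> [z Hz] c /Hz; rewrite /lq_sat /lq_val !big_geq.
rewrite -IH; split; last by move=> [z /fm_step_complete [t Ht]]; exists (zupd z m t).
move=> [z Hz]; exists z; apply: (fm_step_sound (t := z m)) => c /Hz.
rewrite /lq_sat (@lq_val_ext _ _ _ z) // => i _.
by rewrite /zupd; case: eqP => // ->.
Qed.

End FourierMotzkin.

Lemma sum_nat_delta (V : nmodType) N i (F : nat -> V) : (i < N)%N ->
  \sum_(0 <= j < N) (if j == i then F j else 0) = F i.
Proof. by move=> iN; rewrite -big_mkcond /= big_nat1_eq iN. Qed.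

Section GeneratorList.
Variables (R : realType) (n : nat).
Notation vec := 'rV[R]_n.

(* A generator system flattened into one list of tagged vectors; [gen_list L] is [gen]
   with all coefficients indexed by positions in [L]. *)
Definition gitem := (vec * gkind)%type.
Definition gitem0 : gitem := (0, GRay).
Definition point_ind (k : gkind) : R := if k is GPoint then 1 else 0.
Definition bounded_ind (k : gkind) : R := if k is GRay then 0 else 1.

Implicit Types (L : seq gitem).

Definition gen_list L : set vec := [set x | exists z : nat -> R,
  [/\ forall i, (i < size L)%N -> 0 <= z i,
      0 < \sum_(0 <= i < size L) point_ind (nth gitem0 L i).2 * z i,
      \sum_(0 <= i < size L) bounded_ind (nth gitem0 L i).2 * z i = 1 &
      x = \sum_(0 <= i < size L) z i *: (nth gitem0 L i).1]].

Lemma sum_nth_cat (V : nmodType) L1 L2 (F : nat -> gitem -> V) :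
  \sum_(0 <= i < size (L1 ++ L2)) F i (nth gitem0 (L1 ++ L2) i) =
  \sum_(0 <= i < size L1) F i (nth gitem0 L1 i) +
  \sum_(0 <= i < size L2) F (size L1 + i)%N (nth gitem0 L2 i).
Proof.
rewrite size_cat (@big_cat_nat _ _ _ (size L1)) ?leq_addr //=; congr (_ + _).
  by apply: eq_big_nat => i /andP[_ lt]; rewrite nth_cat lt.
rewrite -{1}(add0n (size L1)) big_addn addKn; apply: eq_big_nat => i _.
by rewrite nth_cat ltnNge leq_addl /= addnK addnC.
Qed.

Lemma sum_nth_tag (V : nmodType) (s : seq vec) k (F : nat -> gitem -> V) :
  \sum_(0 <= i < size [seq (g, k) | g <- s]) F i (nth gitem0 [seq (g, k) | g <- s] i) =
  \sum_(i < size s) F i (s`_i, k).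
Proof.
rewrite size_map big_mkord; apply: eq_bigr => i _.
by rewrite (nth_map 0).
Qed.

Definition gen_items (G : gensys R n) : seq gitem :=
  [seq (g, GRay) | g <- grays G] ++ ([seq (g, GPoint) | g <- gpoints G] ++
  [seq (g, GClosure) | g <- gcpoints G]).

Lemma size_gen_items G : size (gen_items G) =
  (size (grays G) + (size (gpoints G) + size (gcpoints G)))%N.
Proof. by rewrite /gen_items !size_cat !size_map. Qed.

Lemma sum_gen_items (V : nmodType) G (F : nat -> gitem -> V) :
  let a := size (grays G) in let b := size (gpoints G) in
  \sum_(0 <= i < size (gen_items G)) F i (nth gitem0 (gen_items G) i) =
  \sum_(i < a) F i ((grays G)`_i, GRay) +
  \sum_(i < b) F (a + i)%N ((gpoints G)`_i, GPoint) +
  \sum_(i < size (gcpoints G)) F (a + (b + i))%N ((gcpoints G)`_i, GClosure).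
Proof.
rewrite /= /gen_items sum_nth_cat sum_nth_tag.
set a := size [seq (g, GRay) | g <- grays G].
set b := size [seq (g, GPoint) | g <- gpoints G].
rewrite (sum_nth_cat _ _ (fun i => F (a + i)%N)) (sum_nth_tag _ _ (fun i => F (a + i)%N)).
by rewrite (sum_nth_tag _ _ (fun i => F (a + (b + i))%N)) /a /b !size_map addrA.
Qed.

Lemma nth_gen_items G j : (j < size (gen_items G))%N ->
  in_gensys G (nth gitem0 (gen_items G) j).2 (nth gitem0 (gen_items G) j).1.
Proof.
rewrite /gen_items !size_cat !size_map nth_cat size_map.
case: ifP => [lt _|/negbT]; first by rewrite (nth_map 0) //= mem_nth.
rewrite -leqNgt => le lt; rewrite nth_cat size_map.
case: ifP => [lt2|/negbT]; first by rewrite (nth_map 0) //= mem_nth.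
rewrite -leqNgt => le2.
have lt3 : (j - size (grays G) - size (gpoints G) < size (gcpoints G))%N by lia.
by rewrite (nth_map 0) //= mem_nth.
Qed.

Lemma in_gen_items G k g : in_gensys G k g ->
  exists2 j, (j < size (gen_items G))%N & nth gitem0 (gen_items G) j = (g, k).
Proof.
rewrite /gen_items; case: k => /= H.
- exists (index g (grays G)).
    by rewrite size_cat size_map (leq_trans _ (leq_addr _ _)) // index_mem.
  by rewrite nth_cat size_map index_mem H (nth_map 0) ?index_mem // nth_index.
- exists (size (grays G) + index g (gpoints G))%N.
    by rewrite !size_cat !size_map ltn_add2l (leq_trans _ (leq_addr _ _)) // index_mem.
  rewrite nth_cat size_map ltnNge leq_addr /= addKn nth_cat size_map index_mem H.
  by rewrite (nth_map 0) ?index_mem // nth_index.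
- exists (size (grays G) + (size (gpoints G) + index g (gcpoints G)))%N.
    by rewrite !size_cat !size_map !ltn_add2l index_mem.
  rewrite nth_cat size_map ltnNge leq_addr /= addKn nth_cat size_map ltnNge leq_addr /=.
  by rewrite addKn (nth_map 0) ?index_mem // nth_index.
Qed.

Definition ord_ext m (f : 'I_m -> R) : nat -> R :=
  fun i => if insub i is Some j then f j else 0.

Lemma ord_extE m (f : 'I_m -> R) (k : 'I_m) : ord_ext f k = f k.
Proof. by rewrite /ord_ext valK. Qed.

Lemma ord_ext_ge0 m (f : 'I_m -> R) i : (forall k, 0 <= f k) -> 0 <= ord_ext f i.
Proof. by rewrite /ord_ext; case: insub. Qed.

Lemma sum_mul0l m (F : 'I_m -> R) : \sum_(i < m) 0 * F i = 0.
Proof. by rewrite big1 // => i _; rewrite mul0r. Qed.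

Lemma sum_mul1l m (F : 'I_m -> R) : \sum_(i < m) 1 * F i = \sum_(i < m) F i.
Proof. by apply: eq_bigr => i _; rewrite mul1r. Qed.

Lemma gen_sub_gen_list G : gen G `<=` gen_list (gen_items G).
Proof.
set a := size (grays G); set b := size (gpoints G).
move=> x [rho [sigma [tau [rho0 [sigma0 tau0] [k sk] mass ->]]]].
pose z i := if (i < a)%N then ord_ext rho i
            else if (i < a + b)%N then ord_ext sigma (i - a) else ord_ext tau (i - (a + b)).
have za (i : 'I_a) : z i = rho i by rewrite /z ltn_ord ord_extE.
have zb (i : 'I_b) : z (a + i)%N = sigma i.
  by rewrite /z ltnNge leq_addr /= ltn_add2l ltn_ord addKn ord_extE.
have zc (i : 'I_(size (gcpoints G))) : z (a + (b + i))%N = tau i.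
  by rewrite /z ltnNge leq_addr /= addnA ltnNge leq_addr /= addKn ord_extE.
exists z; split.
- by move=> i _; rewrite /z; do ![case: ifP => _]; exact: ord_ext_ge0.
- rewrite (sum_gen_items _ (fun i g => point_ind g.2 * z i)) /= !sum_mul0l sum_mul1l.
  rewrite add0r addr0 (eq_bigr sigma) => [|i _]; last by rewrite zb.
  have s0 (i : 'I_b) : true -> 0 <= sigma i by move=> _; exact: sigma0.
  rewrite lt0r psumr_eq0 // sumr_ge0 // andbT.
  by apply/allPn; exists k; rewrite ?mem_index_enum.
- rewrite (sum_gen_items _ (fun i g => bounded_ind g.2 * z i)) /= sum_mul0l !sum_mul1l.
  by rewrite add0r -mass; congr (_ + _); apply: eq_bigr => i _; rewrite ?zb ?zc.
- rewrite (sum_gen_items _ (fun i g => z i *: g.1)) /=.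
  by congr (_ + _ + _); apply: eq_bigr => i _; rewrite ?za ?zb ?zc.
Qed.

Lemma gen_list_sub_gen G : gen_list (gen_items G) `<=` gen G.
Proof.
set a := size (grays G); set b := size (gpoints G).
move=> x [z [z0 pos mass ->]].
have Ha (i : 'I_a) : (i < size (gen_items G))%N.
  by rewrite size_gen_items (leq_trans (ltn_ord i)) ?leq_addr.
have Hb (i : 'I_b) : (a + i < size (gen_items G))%N.
  by rewrite size_gen_items ltn_add2l (leq_trans (ltn_ord i)) ?leq_addr.
have Hc (i : 'I_(size (gcpoints G))) : (a + (b + i) < size (gen_items G))%N.
  by rewrite size_gen_items !ltn_add2l ltn_ord.
exists (fun i => z i), (fun i => z (a + i)%N), (fun i => z (a + (b + i))%N); split.
- by move=> i; apply: z0.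
- by split=> i; apply: z0.
- move: pos; rewrite (sum_gen_items _ (fun i g => point_ind g.2 * z i)) /=.
  rewrite !sum_mul0l sum_mul1l add0r addr0 => pos.
  apply: contrapT => nz; move: pos; rewrite big1 ?ltxx // => i _.
  by apply: contrapT => zi; apply: nz; exists i; apply/eqP.
- move: mass; rewrite (sum_gen_items _ (fun i g => bounded_ind g.2 * z i)) /=.
  by rewrite sum_mul0l !sum_mul1l add0r.
- by rewrite (sum_gen_items _ (fun i g => z i *: g.1)).
Qed.

Lemma gen_list_gen_items G : gen G = gen_list (gen_items G).
Proof. by apply/seteqP; split; [exact: gen_sub_gen_list | exact: gen_list_sub_gen]. Qed.

End GeneratorList.

Notation gvec L j := (nth (gitem0 _ _) L j).1.
Notation gknd L j := (nth (gitem0 _ _) L j).2.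

Section Encoding.
Variables (R : realType) (n : nat).
Notation vec := 'rV[R]_n.
Implicit Types (L : seq (gitem R n)) (c : lineq R n).

Definition lq_opp c : lineq R n := (- lq_x c, fun i => - lq_z c i, - lq_b c, lq_strict c).

Lemma lq_val_opp m x z c : lq_val m x z (lq_opp c) = - lq_val m x z c.
Proof.
rewrite /lq_val /lq_opp /lq_x /lq_z /= dotpNl opprD; congr (_ + _).
by rewrite -sumrN; apply: eq_bigr => i _; rewrite mulNr.
Qed.

Definition lq_eq2 c : seq (lineq R n) := [:: c; lq_opp c].

Lemma lq_eq2P m x z c : ~~ lq_strict c ->
  (forall d, d \in lq_eq2 c -> lq_sat m x z d) <-> lq_val m x z c = lq_b c.
Proof.
move=> /negbTE ns.
have sat_le d : lq_strict d = false -> lq_sat m x z d <-> lq_val m x z d <= lq_b d.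
  by rewrite /lq_sat /ineq => ->.
split=> [H|E d].
  apply/eqP; rewrite eq_le; apply/andP; split; first exact/(sat_le c ns)/H/mem_head.
  have /(sat_le (lq_opp c) ns) := H (lq_opp c) (mem_last c [:: lq_opp c]).
  by rewrite lq_val_opp lerN2.
by rewrite !inE => /orP[]/eqP ->; apply/sat_le => //; rewrite ?lq_val_opp E.
Qed.

Lemma lq_eqsP m x z (E : seq (lineq R n)) : all (fun c => ~~ lq_strict c) E ->
  (forall d, d \in flatten [seq lq_eq2 c | c <- E] -> lq_sat m x z d) <->
  (forall c, c \in E -> lq_val m x z c = lq_b c).
Proof.
move=> /allP ns; split=> H c.
  by move=> cE; apply/(lq_eq2P _ _ _ (ns c cE)) => d dc; apply: H; apply/flatten_mapP; exists c.
case/flatten_mapP => c' c'E; move: c; apply/(lq_eq2P _ _ _ (ns c' c'E)).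
exact: H.
Qed.

(* the linear system in [x] and the coefficients [z] whose solutions describe [gen_list L] *)
Definition z_nonneg i : lineq R n := (0, fun j => if j == i then -1 else 0, 0, false).
Definition point_pos L : lineq R n := (0, fun j => - point_ind R (gknd L j), 0, true).
Definition mass_one L : lineq R n := (0, fun j => bounded_ind R (gknd L j), 1, false).
Definition coord_eq L k : lineq R n := (delta_mx 0 k, fun j => - gvec L j 0 k, 0, false).

Definition gen_list_eqs L := mass_one L :: [seq coord_eq L k | k <- enum 'I_n].

Definition gen_list_sys L : seq (lineq R n) :=
  point_pos L :: [seq z_nonneg i | i <- iota 0 (size L)] ++
  flatten [seq lq_eq2 c | c <- gen_list_eqs L].

Lemma lq_val_z_nonneg L x z i : (i < size L)%N ->
  lq_val (size L) x z (z_nonneg i) = - z i.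
Proof.
move=> iL; rewrite /lq_val /lq_x /lq_z /= dotp0l add0r -(sum_nat_delta (fun j => - z j) iL).
by apply: eq_bigr => j _; case: eqP; rewrite ?mulN1r ?mul0r.
Qed.

Lemma lq_val_point_pos L x z : lq_val (size L) x z (point_pos L) =
  - \sum_(0 <= i < size L) point_ind R (gknd L i) * z i.
Proof.
rewrite /lq_val /lq_x /lq_z /= dotp0l add0r -sumrN.
by apply: eq_bigr => i _; rewrite mulNr.
Qed.

Lemma lq_val_mass_one L x z : lq_val (size L) x z (mass_one L) =
  \sum_(0 <= i < size L) bounded_ind R (gknd L i) * z i.
Proof. by rewrite /lq_val /lq_x /lq_z /= dotp0l add0r. Qed.

Lemma lq_val_coord_eq L x z k : lq_val (size L) x z (coord_eq L k) =
  x 0 k - (\sum_(0 <= i < size L) z i *: gvec L i) 0 k.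
Proof.
rewrite /lq_val /lq_x /lq_z /= dotp_delta_mx summxE -sumrN.
by congr (_ + _); apply: eq_bigr => i _; rewrite mxE mulNr mulrC.
Qed.

Lemma gen_list_eqsP L x z :
  (forall c, c \in gen_list_eqs L -> lq_val (size L) x z c = lq_b c) <->
  \sum_(0 <= i < size L) bounded_ind R (gknd L i) * z i = 1 /\
  x = \sum_(0 <= i < size L) z i *: gvec L i.
Proof.
split=> [H|[mass ->] c].
  split; first by rewrite -(lq_val_mass_one L x); apply: (H _ (mem_head _ _)).
  apply/matrixP => i k; rewrite (ord1 i); apply/eqP; rewrite -subr_eq0.
  by rewrite -lq_val_coord_eq H // inE map_f ?mem_enum ?orbT.
rewrite inE => /orP[/eqP ->|/mapP [k _ ->]]; first by rewrite lq_val_mass_one.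
by rewrite lq_val_coord_eq subrr.
Qed.

Lemma gen_list_sysP L x :
  gen_list L x <-> exists z, forall c, c \in gen_list_sys L -> lq_sat (size L) x z c.
Proof.
have eqs_ns : all (fun c => ~~ lq_strict c) (gen_list_eqs L).
  by rewrite /= all_map; apply/allP.
have sat_nonneg z i : (i < size L)%N -> lq_sat (size L) x z (z_nonneg i) <-> 0 <= z i.
  by move=> iL; rewrite /lq_sat lq_val_z_nonneg // /ineq /= oppr_le0.
have sat_pos z : lq_sat (size L) x z (point_pos L) <->
    0 < \sum_(0 <= i < size L) point_ind R (gknd L i) * z i.
  by rewrite /lq_sat lq_val_point_pos /ineq /= oppr_lt0.
split=> [[z [z0 pos mass xE]]|[z Hz]]; exists z.
  move=> c; rewrite inE mem_cat; case/or3P => [/eqP ->|/mapP [i + ->]|].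
  - exact/sat_pos.
  - by rewrite mem_iota => /andP[_ iL]; apply/(sat_nonneg z i iL)/z0.
  by move: c; apply/(lq_eqsP _ _ _ eqs_ns)/gen_list_eqsP; split.
have [mass ->] : \sum_(0 <= i < size L) bounded_ind R (gknd L i) * z i = 1 /\
    x = \sum_(0 <= i < size L) z i *: gvec L i.
  apply/gen_list_eqsP/(lq_eqsP _ _ _ eqs_ns) => c cE.
  by apply: Hz; rewrite inE mem_cat cE !orbT.
split=> //; last exact/sat_pos/Hz/mem_head.
move=> i iL; apply/(sat_nonneg z i iL)/Hz.
by rewrite inE mem_cat map_f ?orbT // mem_iota.
Qed.

Definition lq_constraint (c : lineq R n) : constraint R n := (lq_x c, lq_b c, lq_strict c).

(* Minkowski-Weyl, the direction we need: eliminating the coefficients yields constraints *)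
Lemma gen_list_NNC L : gen_list L !=set0 -> is_NNC (gen_list L).
Proof.
move=> [x0 Lx0].
pose C := [seq lq_constraint c | c <- fm_elim (size L) (gen_list_sys L)].
have E : gen_list L = con C.
  apply/seteqP; split=> x.
    move/gen_list_sysP/fm_elimP => H c /mapP [c' c'S ->].
    by have := H c' c'S; rewrite /lq_sat /lq_val big_geq ?addr0.
  move=> H; apply/gen_list_sysP/fm_elimP => c cS.
  by have := H _ (map_f _ cS); rewrite /lq_sat /lq_val big_geq ?addr0.
exists [seq c <- C | ca c != 0]; split; first by move=> c; rewrite mem_filter => /andP[].
rewrite E; apply/seteqP; split=> x Hx c; first by rewrite mem_filter => /andP[_]; apply: Hx.
move=> cC; have [c0|c0] := eqVneq (ca c) 0; last by apply: Hx; rewrite mem_filter c0.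
by rewrite E in Lx0; have := Lx0 c cC; rewrite /sat_constraint c0 !dotp0l.
Qed.

End Encoding.

Section RealLine.
Variable R : realType.
Implicit Types (A B C M b e s t : R).

Lemma segment_near_end A C e : 0 < e ->
  exists2 t0, 0 <= t0 < 1 & forall t, t0 <= t -> t <= 1 -> `|(1 - t) * A + t * C - C| < e.
Proof.
move=> e0; set d := `|A - C| + e; have d0 : 0 < d by rewrite ltr_wpDl.
exists (1 - e / d).
  rewrite subr_ge0 ler_pdivrMr // mul1r lerDr normr_ge0 /=.
  by rewrite ltrBlDr ltrDl divr_gt0.
move=> t t0 t1; have -> : (1 - t) * A + t * C - C = (1 - t) * (A - C) by ring.
have ed0 : 0 < e / d by rewrite divr_gt0.
rewrite normrM ger0_norm ?subr_ge0 //; apply: (@le_lt_trans _ _ (e / d * `|A - C|)).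
  by rewrite ler_wpM2r //; lra.
by rewrite -[X in _ < X](divfK (lt0r_neq0 d0)) ltr_pM2l // /d ltrDl.
Qed.

Lemma ineq_segment_end_le st A C b :
  (forall t, 0 <= t < 1 -> ineq st ((1 - t) * A + t * C) b) -> C <= b.
Proof.
move=> H; rewrite leNgt; apply/negP; rewrite -subr_gt0 => bC.
have [t0 /andP[t00 t01] near] := segment_near_end A C bC.
have := ineqW (H t0 _); rewrite t00 t01 => /(_ isT).
by have := near t0 (lexx _) (ltW t01); rewrite ltr_norml => /andP[+ _]; lra.
Qed.

Lemma segment_end_lt A C b : C < b ->
  exists2 t0, t0 < 1 & forall t, t0 <= t -> t < 1 -> (1 - t) * A + t * C < b.
Proof.
rewrite -subr_gt0 => Cb; have [t0 /andP[_ t01] near] := segment_near_end A C Cb.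
exists t0 => // t tt0 t1.
by have := near t tt0 (ltW t1); rewrite ltr_norml => /andP[_]; lra.
Qed.

Lemma ray_beyond A B M : 0 < B -> exists2 r0, 0 <= r0 & forall r, r0 <= r -> M < A + r * B.
Proof.
move=> B0; exists ((`|M - A| + 1) / B); first by rewrite divr_ge0 // ltW.
move=> r; rewrite ler_pdivrMr // => h.
by have := ler_norm (M - A); lra.
Qed.

Lemma ineq_ray_le0 st A B b : (forall r, 0 <= r -> ineq st (A + r * B) b) -> B <= 0.
Proof.
move=> H; rewrite leNgt; apply/negP => B0.
have [r r0 Hr] := ray_beyond A b B0.
by have := ineqW (H r r0); have := Hr r (lexx r); lra.
Qed.

Lemma ray_eventually_lt A B b : B < 0 -> exists r0, forall r, r0 <= r -> A + r * B < b.
Proof.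
rewrite -oppr_gt0 => B0; have [r0 _ Hr] := ray_beyond (- A) (- b) B0.
by exists r0 => r /Hr; lra.
Qed.

Lemma segment_cross A B b t : A < B ->
  [/\ (1 - t) * A + t * B <= b <-> t <= (A - b) / (A - B),
      (1 - t) * A + t * B < b <-> t < (A - b) / (A - B) &
      (1 - (A - b) / (A - B)) * A + (A - b) / (A - B) * B = b].
Proof.
move=> AB; have d0 : 0 < B - A by rewrite subr_gt0.
have -> : (A - b) / (A - B) = (b - A) / (B - A) by rewrite -mulrNN opprB -invrN opprB.
have -> : (1 - t) * A + t * B = A + t * (B - A) by ring.
split.
- by rewrite ler_pdivlMr // -lerBrDl mulrC.
- by rewrite ltr_pdivlMr // -ltrBrDl mulrC.
- by field; rewrite lt0r_neq0.
Qed.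

Lemma ineq_convex_after st A B b s t : 0 <= s -> s < t -> t <= 1 ->
  (1 - s) * A + s * B <= b -> ineq st B b -> ineq st ((1 - t) * A + t * B) b.
Proof.
move=> s0 st' t1 hS hB; have s1 : 0 < 1 - s by rewrite subr_gt0; apply: lt_le_trans t1.
have -> : (1 - t) * A + t * B =
  (1 - (t - s) / (1 - s)) * ((1 - s) * A + s * B) + (t - s) / (1 - s) * B.
  by field; rewrite lt0r_neq0.
apply: ineq_convex_le => //; apply/andP; split; first by rewrite divr_gt0 // subr_gt0.
by rewrite ler_pdivrMr // mul1r lerD2r.
Qed.

Lemma eventually_seq (T : eqType) (s : seq T) (Q : T -> R -> Prop) :
  (forall c, c \in s -> exists t0, forall t, t0 <= t -> Q c t) ->
  exists t0, forall t, t0 <= t -> forall c, c \in s -> Q c t.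
Proof.
elim: s => [|a s IH] H; first by exists 0.
have [t1 H1] := H a (mem_head _ _).
have [|t2 H2] := IH; first by move=> c cs; apply: H; rewrite inE cs orbT.
exists (Num.max t1 t2) => t; rewrite ge_max => /andP[h1 h2] c.
by rewrite inE => /orP[/eqP->|cs]; [apply: H1 | apply: H2].
Qed.

Lemma eventually_seq_lt1 (T : eqType) (s : seq T) (Q : T -> R -> Prop) :
  (forall c, c \in s -> exists2 t0, t0 < 1 & forall t, t0 <= t -> t < 1 -> Q c t) ->
  exists2 t0, t0 < 1 & forall t, t0 <= t -> t < 1 -> forall c, c \in s -> Q c t.
Proof.
elim: s => [|a s IH] H; first by exists 0.
have [t1 t11 H1] := H a (mem_head _ _).
have [|t2 t21 H2] := IH; first by move=> c cs; apply: H; rewrite inE cs orbT.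
exists (Num.max t1 t2); first by rewrite gt_max t11 t21.
move=> t; rewrite ge_max => /andP[h1 h2] t1' c.
by rewrite inE => /orP[/eqP->|cs]; [apply: H1 | apply: H2].
Qed.

End RealLine.

Section GenListOperations.
Variables (R : realType) (n : nat).
Notation vec := 'rV[R]_n.
Implicit Types (L : seq (gitem R n)).

Lemma sum_nat_bump N i (F z : nat -> R) a b : (i < N)%N ->
  \sum_(0 <= j < N) F j * (a * z j + (if j == i then b else 0)) =
  a * \sum_(0 <= j < N) F j * z j + F i * b.
Proof.
move=> iN; rewrite mulr_sumr -(sum_nat_delta (fun j => F j * b) iN) -big_split /=.
by apply: eq_bigr => j _; rewrite mulrDr mulrCA; case: eqP; rewrite ?mulr0.
Qed.

Lemma sumv_nat_bump N i (g : nat -> vec) (z : nat -> R) a b : (i < N)%N ->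
  \sum_(0 <= j < N) (a * z j + (if j == i then b else 0)) *: g j =
  a *: \sum_(0 <= j < N) z j *: g j + b *: g i.
Proof.
move=> iN; rewrite scaler_sumr -(sum_nat_delta (fun j => b *: g j) iN) -big_split /=.
by apply: eq_bigr => j _; rewrite scalerDl scalerA; case: eqP; rewrite ?scale0r.
Qed.

Lemma gen_list_bump L x i a b : (i < size L)%N -> gen_list L x -> 0 <= a -> 0 <= b ->
  (forall s, 0 < s -> 0 < a * s + point_ind R (gknd L i) * b) ->
  a + bounded_ind R (gknd L i) * b = 1 ->
  gen_list L (a *: x + b *: gvec L i).
Proof.
move=> iL [z [z0 pos mass ->]] a0 b0 Hp Hc.
exists (fun j => a * z j + (if j == i then b else 0)); split.
- move=> j jL; apply: addr_ge0; first by rewrite mulr_ge0 // z0.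
  by case: eqP.
- by rewrite sum_nat_bump //; apply: Hp.
- by rewrite sum_nat_bump // mass mulr1.
- by rewrite sumv_nat_bump.
Qed.

Lemma gen_list_add_ray L x i r : (i < size L)%N -> gknd L i = GRay ->
  gen_list L x -> 0 <= r -> gen_list L (x + r *: gvec L i).
Proof.
move=> iL ki Lx r0; rewrite -[x]scale1r; apply: gen_list_bump => //.
- by move=> s s0; rewrite ki /point_ind mul1r mul0r addr0.
- by rewrite ki /bounded_ind mul0r addr0.
Qed.

Lemma gen_list_toward_closure L x i t : (i < size L)%N -> gknd L i = GClosure ->
  gen_list L x -> 0 <= t -> t < 1 -> gen_list L ((1 - t) *: x + t *: gvec L i).
Proof.
move=> iL ki Lx t0 t1; apply: gen_list_bump => //.
- by rewrite subr_ge0 ltW.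
- by move=> s s0; rewrite ki /point_ind mul0r addr0 mulr_gt0 // subr_gt0.
- by rewrite ki /bounded_ind mul1r subrK.
Qed.

Lemma gen_list_point L i : (i < size L)%N -> gknd L i = GPoint -> gen_list L (gvec L i).
Proof.
move=> iL ki; exists (fun j => 0 * 0 + (if j == i then 1 else 0)); split.
- by move=> j _; rewrite mul0r add0r; case: eqP.
- by rewrite (@sum_nat_bump _ _ _ (fun=> 0)) // ki /point_ind mul0r add0r mul1r.
- by rewrite (@sum_nat_bump _ _ _ (fun=> 0)) // ki /bounded_ind mul0r add0r mul1r.
- by rewrite (@sumv_nat_bump _ _ _ (fun=> 0)) // scale0r add0r scale1r.
Qed.

Lemma sum_nth_cat_padl (V : nmodType) L1 L2 (F : gitem R n -> R -> V) (z : nat -> R) :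
  (forall g, F g 0 = 0) ->
  \sum_(0 <= i < size (L1 ++ L2))
     F (nth (gitem0 R n) (L1 ++ L2) i) (if (i < size L1)%N then z i else 0) =
  \sum_(0 <= i < size L1) F (nth (gitem0 R n) L1 i) (z i).
Proof.
move=> F0; rewrite (sum_nth_cat _ _ (fun i g => F g (if (i < size L1)%N then z i else 0))).
rewrite [X in _ + X]big1 ?addr0 => [|i _] /=; last by rewrite ltnNge leq_addr /= F0.
by apply: eq_big_nat => i /andP[_ ->].
Qed.

Lemma sum_nth_cat_padr (V : nmodType) L1 L2 (F : gitem R n -> R -> V) (z : nat -> R) :
  (forall g, F g 0 = 0) ->
  \sum_(0 <= i < size (L1 ++ L2))
     F (nth (gitem0 R n) (L1 ++ L2) i) (if (i < size L1)%N then 0 else z (i - size L1)%N) =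
  \sum_(0 <= i < size L2) F (nth (gitem0 R n) L2 i) (z i).
Proof.
move=> F0.
rewrite (sum_nth_cat _ _ (fun i g => F g (if (i < size L1)%N then 0 else z (i - size L1)%N))).
rewrite [X in X + _]big1_seq ?add0r => [|i /andP[_]]; last first.
  by rewrite mem_index_iota => /andP[_ lt] /=; rewrite lt F0.
by apply: eq_bigr => i _ /=; rewrite ltnNge leq_addr /= addKn.
Qed.

Lemma gen_list_catl L1 L2 : gen_list L1 `<=` gen_list (L1 ++ L2).
Proof.
move=> x [z [z0 pos mass ->]]; exists (fun i => if (i < size L1)%N then z i else 0); split.
- by move=> i _; case: ifP => // /z0.
- by rewrite (@sum_nth_cat_padl _ L1 L2 (fun g c => point_ind R g.2 * c)) // => g; rewrite mulr0.
- by rewrite (@sum_nth_cat_padl _ L1 L2 (fun g c => bounded_ind R g.2 * c)) // => g; rewrite mulr0.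
- by rewrite (@sum_nth_cat_padl _ L1 L2 (fun g c => c *: g.1)) // => g; rewrite scale0r.
Qed.

Lemma gen_list_catr L1 L2 : gen_list L2 `<=` gen_list (L1 ++ L2).
Proof.
move=> x [z [z0 pos mass ->]].
exists (fun i => if (i < size L1)%N then 0 else z (i - size L1)%N); split.
- by move=> i; rewrite size_cat; case: ifP => // /negbT; rewrite -leqNgt => ? ?; apply: z0; lia.
- by rewrite (@sum_nth_cat_padr _ L1 L2 (fun g c => point_ind R g.2 * c)) // => g; rewrite mulr0.
- by rewrite (@sum_nth_cat_padr _ L1 L2 (fun g c => bounded_ind R g.2 * c)) // => g; rewrite mulr0.
- by rewrite (@sum_nth_cat_padr _ L1 L2 (fun g c => c *: g.1)) // => g; rewrite scale0r.
Qed.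

Lemma sum_nat_gt0_witness N (F : nat -> R) :
  0 < \sum_(0 <= j < N) F j -> exists2 j, (j < N)%N & 0 < F j.
Proof.
move=> H; apply: contrapT => nF; move: H; apply/negP; rewrite -leNgt big_seq.
apply: sumr_le0 => j; rewrite mem_index_iota => /andP[_ jN].
by rewrite leNgt; apply/negP => Fj; apply: nF; exists j.
Qed.

Section Bound.
Variables (L : seq (gitem R n)) (z : nat -> R) (a : vec) (b : R).
Hypotheses (z0 : forall j, (j < size L)%N -> 0 <= z j)
           (mass : \sum_(0 <= j < size L) bounded_ind R (gknd L j) * z j = 1).

Lemma gen_list_dotp_le :
  (forall j, (j < size L)%N -> 0 < z j -> dotp a (gvec L j) <= bounded_ind R (gknd L j) * b) ->
  dotp a (\sum_(0 <= j < size L) z j *: gvec L j) <= b.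
Proof.
move=> Hb; rewrite dotp_sumr.
have -> : b = \sum_(0 <= j < size L) z j * (bounded_ind R (gknd L j) * b).
  by rewrite -[LHS]mul1r -mass mulr_suml; apply: eq_bigr => j _; rewrite mulrCA mulrA.
rewrite big_seq [X in _ <= X]big_seq; apply: ler_sum => j.
rewrite mem_index_iota => /andP[_ jL]; rewrite dotpZr.
have := z0 jL; rewrite le0r => /orP[/eqP->|zj]; first by rewrite !mul0r.
by rewrite ler_pM2l // Hb.
Qed.

Lemma gen_list_dotp_eq :
  (forall j, (j < size L)%N -> dotp a (gvec L j) <= bounded_ind R (gknd L j) * b) ->
  dotp a (\sum_(0 <= j < size L) z j *: gvec L j) = b ->
  forall j, (j < size L)%N -> 0 < z j -> dotp a (gvec L j) = bounded_ind R (gknd L j) * b.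
Proof.
move=> Hb E.
have slack0 : \sum_(0 <= j < size L)
    z j * (bounded_ind R (gknd L j) * b - dotp a (gvec L j)) = 0.
  under eq_bigr => j _ do rewrite mulrBr mulrCA mulrA.
  rewrite sumrB -mulr_suml mass mul1r -{1}E dotp_sumr.
  by under eq_bigr => j _ do rewrite dotpZr; rewrite subrr.
move=> j jL zj; apply/eqP; rewrite eq_sym -subr_eq0.
suff : z j * (bounded_ind R (gknd L j) * b - dotp a (gvec L j)) == 0.
  by rewrite mulf_eq0 (gt_eqF zj).
move/eqP: slack0; rewrite big_seq psumr_eq0 => [/allP/(_ j)|i].
  by rewrite mem_index_iota jL => /(_ isT).
by rewrite mem_index_iota => /andP[_ iL]; rewrite mulr_ge0 ?z0 // subr_ge0 Hb.
Qed.

End Bound.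

Definition is_convex (U : set vec) :=
  forall u v t, U u -> U v -> 0 <= t <= 1 -> U ((1 - t) *: u + t *: v).

Definition toward_in (U : set vec) (g : vec) :=
  forall u t, U u -> 0 <= t -> t < 1 -> U ((1 - t) *: u + t *: g).

Definition gen_closed L (U : set vec) :=
  [/\ forall i, (i < size L)%N -> gknd L i = GRay ->
        forall u r, U u -> 0 <= r -> U (u + r *: gvec L i),
      forall i, (i < size L)%N -> gknd L i = GClosure -> toward_in U (gvec L i) &
      forall i, (i < size L)%N -> gknd L i = GPoint -> U (gvec L i)].

Lemma gen_closed_cat L1 L2 U : gen_closed L1 U -> gen_closed L2 U -> gen_closed (L1 ++ L2) U.
Proof.
move=> [r1 c1 p1] [r2 c2 p2].
have shift i : (i < size (L1 ++ L2))%N -> (i < size L1)%N = false -> (i - size L1 < size L2)%N.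
  by rewrite size_cat => ? /negbT; lia.
split=> i iL; rewrite nth_cat; case: ifP => iL1.
- exact: r1.
- exact: r2 (shift i iL iL1).
- exact: c1.
- exact: c2 (shift i iL iL1).
- exact: p1.
- exact: p2 (shift i iL iL1).
Qed.

Section Induction.
Variables (L : seq (gitem R n)) (U : set vec).
Hypotheses (U_convex : is_convex U) (U_gen : gen_closed L U).

Lemma toward_in_bounded i : (i < size L)%N -> bounded_ind R (gknd L i) = 1 ->
  toward_in U (gvec L i).
Proof.
have [_ U_closure U_point] := U_gen.
rewrite /bounded_ind => iL; case K: (gknd L i) => h; last exact: U_closure.
  by move: h => /eqP; rewrite eq_sym oner_eq0.
by move=> u t Uu t0 t1; apply: U_convex => //; [exact: U_point | rewrite t0 ltW].
Qed.

Section Partial.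
Variable w : nat -> R.
Hypothesis w0 : forall j, (j < size L)%N -> 0 <= w j.

Let mass k := \sum_(0 <= j < k) bounded_ind R (gknd L j) * w j.
Let bsum k := \sum_(0 <= j < k) (bounded_ind R (gknd L j) * w j) *: gvec L j.
Let rsum k := \sum_(0 <= j < k) ((1 - bounded_ind R (gknd L j)) * w j) *: gvec L j.

(* the first [k] generators, weighted by [w], can be added to a point [u] of weight [l] *)
Lemma gen_list_partial k : (k <= size L)%N -> forall u l, U u -> 0 < l ->
  U ((l + mass k)^-1 *: (l *: u + bsum k) + rsum k).
Proof.
elim: k => [_|k IH kL] u l Uu l0.
  by rewrite /mass /bsum /rsum !big_geq // !addr0 scalerA mulVf ?gt_eqF // scale1r.
rewrite /mass /bsum /rsum !big_nat_recr //= -/(mass k) -/(bsum k) -/(rsum k).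
have [K|bk] : gknd L k = GRay \/ bounded_ind R (gknd L k) = 1.
  by case: (gknd L k); [left|right|right].
  rewrite K /bounded_ind mul0r addr0 scale0r addr0 subr0 mul1r addrA.
  by case: U_gen => U_ray _ _; apply: U_ray => //; [exact: IH (ltnW kL) _ _ Uu l0 | exact: w0].
rewrite bk subrr !mul0r scale0r addr0 !mul1r.
set l' := l + w k; have l'0 : 0 < l' by rewrite ltr_wpDr // w0.
have -> : l + (mass k + w k) = l' + mass k by rewrite /l'; ring.
have -> : l *: u + (bsum k + w k *: gvec L k) =
    l' *: ((1 - w k / l') *: u + (w k / l') *: gvec L k) + bsum k.
  rewrite scalerDr !scalerA mulrBr mulr1 mulrCA mulfV ?gt_eqF // mulr1.
  by rewrite /l' addrK addrAC addrA.
apply: (IH (ltnW kL) _ _ _ l'0); apply: toward_in_bounded => //.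
- exact: divr_ge0 (w0 kL) (ltW l'0).
- by rewrite ltr_pdivrMr // mul1r /l' ltrDr.
Qed.

End Partial.

Lemma gen_list_ind : gen_list L `<=` U.
Proof.
move=> x [z [z0 pos mass ->]].
have [i0 i0L pi0] := sum_nat_gt0_witness pos.
have [ki0 zi0] : gknd L i0 = GPoint /\ 0 < z i0.
  by move: pi0; case: (gknd L i0); rewrite /point_ind ?mul0r ?ltxx // mul1r.
pose w j := if j == i0 then 0 else z j.
have zw j : z j = 1 * w j + (if j == i0 then z i0 else 0).
  by rewrite mul1r /w; case: eqP => [->|]; rewrite ?add0r ?addr0.
have w0 j : (j < size L)%N -> 0 <= w j by rewrite /w; case: eqP => // _; apply: z0.
have mass1 : z i0 + \sum_(0 <= j < size L) bounded_ind R (gknd L j) * w j = 1.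
  rewrite -{}mass; under [RHS]eq_bigr => j _ do rewrite zw.
  by rewrite sum_nat_bump // mul1r ki0 /= mul1r addrC.
have [_ _ U_point] := U_gen.
have := gen_list_partial w0 (leqnn _) (U_point _ i0L ki0) zi0.
rewrite mass1 invr1 scale1r; congr U.
under [RHS]eq_bigr => j _ do rewrite zw.
rewrite sumv_nat_bump // scale1r -addrA [RHS]addrC; congr (_ + _).
rewrite -big_split /=; apply: eq_bigr => j _.
by rewrite -scalerDl -mulrDl addrC subrK mul1r.
Qed.

End Induction.

End GenListOperations.

Section Topology.
Variables (R : realType) (n : nat).
Notation vec := 'rV[R]_n.

Lemma coord_le_norm (x : vec) k : `|x 0 k| <= `|x|.
Proof.
have := le_bigmax 0 (fun ij : 'I_1 * 'I_n => `|x ij.1 ij.2|) (0, k).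
by rewrite -mx_normrE.
Qed.

Lemma dotp_norm_le (a v : vec) : `|dotp a v| <= (\sum_k `|a 0 k|) * `|v|.
Proof.
rewrite /dotp mulr_suml; apply: le_trans (ler_norm_sum _ _ _) _.
by apply: ler_sum => k _; rewrite normrM ler_wpM2l // coord_le_norm.
Qed.

Lemma not_closureP (P : set vec) g :
  ~ closure P g -> exists2 e : R, 0 < e & forall x, `|g - x| < e -> ~ P x.
Proof.
move=> ncl; have [B [gB PB]] : exists B, nbhs g B /\ forall x, P x -> ~ B x.
  apply: contrapT => nB; apply: ncl => B gB; apply: contrapT => nPB.
  by apply: nB; exists B; split=> // x Px Bx; apply: nPB; exists x.
move/nbhs_ballP: gB => [e e0 eB]; exists e => // x gx Px.
by apply: (PB x Px); apply: eB; rewrite -ball_normE.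
Qed.

Lemma closure_near (P : set vec) g e : closure P g -> 0 < e -> exists x, P x /\ `|g - x| < e.
Proof.
move=> clg e0; have [x [Px gx]] := clg _ (nbhsx_ballx g e e0).
by exists x; split=> //; move: gx; rewrite -ball_normE.
Qed.

Lemma closure_halfspace (P : set vec) (a : vec) b g :
  (forall x, P x -> dotp a x <= b) -> closure P g -> dotp a g <= b.
Proof.
move=> Pb clg; rewrite leNgt; apply/negP => gb.
set S := \sum_k `|a 0 k| + 1; have S0 : 0 < S by rewrite ltr_wpDl ?sumr_ge0.
have e0 : 0 < (dotp a g - b) / S by rewrite divr_gt0 // subr_gt0.
have [x [Px gx]] := closure_near clg e0; have := Pb x Px.
have h1 : `|dotp a (g - x)| <= S * `|g - x|.
  by apply: le_trans (dotp_norm_le _ _) _; rewrite ler_wpM2r // lerDl.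
have h2 : S * `|g - x| < dotp a g - b by rewrite mulrC -ltr_pdivlMr.
by have := ler_norm (dotp a (g - x)); rewrite dotpBr in h1 *; lra.
Qed.

End Topology.

Section Polyhedra.
Variables (R : realType) (n : nat).
Notation vec := 'rV[R]_n.
Implicit Types (C : seq (constraint R n)) (L : seq (gitem R n)).

Lemma sat_constraintE (x : vec) c : sat_constraint x c = ineq (cstrict c) (dotp (ca c) x) (cb c).
Proof. by []. Qed.

Definition con_le C : set vec := [set x | forall c, c \in C -> dotp (ca c) x <= cb c].

Lemma con_sub_con_le C : con C `<=` con_le C.
Proof. by move=> x Cx c /Cx; apply: ineqW. Qed.

Lemma closure_con_le C x : closure (con C) x -> con_le C x.
Proof. by move=> clx c cC; apply: (closure_halfspace _ clx) => y /con_sub_con_le; apply. Qed.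

Lemma con_convex C (u v : vec) t : con C u -> con C v -> 0 <= t <= 1 ->
  con C ((1 - t) *: u + t *: v).
Proof.
move=> Cu Cv t01 c cC; rewrite sat_constraintE dotp_convex.
by apply: ineq_convex; [|apply: Cu|apply: Cv].
Qed.

Lemma sat_toward (v y : vec) c t : sat_constraint v c -> dotp (ca c) y <= cb c ->
  0 <= t -> t < 1 -> sat_constraint ((1 - t) *: v + t *: y) c.
Proof.
move=> vc yc t0 t1; rewrite sat_constraintE dotp_convex.
have -> : (1 - t) * dotp (ca c) v + t * dotp (ca c) y =
          (1 - (1 - t)) * dotp (ca c) y + (1 - t) * dotp (ca c) v by ring.
by apply: ineq_convex_le => //; rewrite subr_gt0 t1 lerBlDr lerDl.
Qed.

Lemma con_toward_con_le C (v y : vec) t : con C v -> con_le C y -> 0 <= t -> t < 1 ->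
  con C ((1 - t) *: v + t *: y).
Proof. by move=> Cv Cy t0 t1 c cC; apply: sat_toward => //; [apply: Cv | apply: Cy]. Qed.

Lemma convex_comb_ray (u g : vec) l r : (1 - l) *: u + l *: (u + r *: g) = u + (l * r) *: g.
Proof. by rewrite scalerDr scalerA addrA -scalerDl subrK scale1r. Qed.

Lemma convex_comb_comb (u v : vec) l m :
  (1 - l) *: u + l *: ((1 - m) *: u + m *: v) = (1 - l * m) *: u + (l * m) *: v.
Proof. by rewrite scalerDr !scalerA addrA -scalerDl; congr (_ *: _ + _); ring. Qed.

Lemma con_ray_dotp_le0 C (p r : vec) c : con C p -> c \in C ->
  (forall rho, 0 <= rho -> con C (p + rho *: r)) -> dotp (ca c) r <= 0.
Proof.
move=> Cp cC Cr; apply: (@ineq_ray_le0 _ (cstrict c) (dotp (ca c) p) _ (cb c)) => rho rho0.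
by have := Cr rho rho0 c cC; rewrite sat_constraintE dotpDr dotpZr.
Qed.

Lemma is_ray_of_dotp_le0 C r c : con C !=set0 -> is_ray_of (con C) r -> c \in C ->
  dotp (ca c) r <= 0.
Proof. by move=> [p Cp] [_ Cr] cC; exact: (con_ray_dotp_le0 Cp cC (Cr p ^~ Cp)). Qed.

Lemma saturatesE k (g : vec) c : saturates k g c <-> dotp (ca c) g = bounded_ind R k * cb c.
Proof. by case: k => /=; rewrite /bounded_ind ?mul0r ?mul1r. Qed.

(* rays satisfy the constraints as recession directions, closure points in the limit *)
Lemma gen_list_item_dotp_le L C c j : gen_list L !=set0 -> gen_list L `<=` con C ->
  c \in C -> (j < size L)%N -> dotp (ca c) (gvec L j) <= bounded_ind R (gknd L j) * cb c.
Proof.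
move=> [p Lp] LC cC jL; case K: (gknd L j); rewrite /bounded_ind ?mul0r ?mul1r.
- apply: con_ray_dotp_le0 (LC _ Lp) cC _ => rho rho0.
  exact/LC/gen_list_add_ray.
- by have /LC/(_ c cC)/ineqW := gen_list_point jL K.
- apply: (@ineq_segment_end_le _ (cstrict c) (dotp (ca c) p)) => t /andP[t0 t1].
  have /LC/(_ c cC) := gen_list_toward_closure jL K Lp t0 t1.
  by rewrite sat_constraintE dotp_convex.
Qed.

End Polyhedra.

Section NoWitness.
Variables (R : realType) (n : nat).
Notation vec := 'rV[R]_n.

(* the negation of [hull_cond], indexed by positions in a generator list *)
Definition no_hull_witness (Ci : seq (constraint R n)) (L : seq (gitem R n)) (Pj H : set vec) :=
  forall j c, (j < size L)%N -> c \in Ci -> saturates (gknd L j) (gvec L j) c -> violates Pj c ->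
  [/\ gknd L j = GRay -> is_ray_of Pj (gvec L j),
      gknd L j = GClosure -> closure Pj (gvec L j),
      gknd L j = GPoint -> ~~ cstrict c -> closure Pj (gvec L j) &
      cstrict c -> forall p, H p -> dotp (ca c) p = cb c -> Pj p].

Lemma not_hull_cond_no_witness (Pi Pj H : set vec) Ci (Gi : gensys R n) :
  ~ hull_cond Pi Ci Gi Pj H -> no_hull_witness Ci (gen_items Gi) Pj H.
Proof.
move=> nhc j c jL cC sat vc; have inG := nth_gen_items jL.
set g := gvec _ j in inG sat *; set k := gknd _ j in inG sat *.
split.
- move=> kR; apply: contrapT => nr; apply: nhc; exists k, g, c.
  by split=> //; apply: Or31; split; [left | rewrite kR].
- move=> kC; apply: contrapT => nr; apply: nhc; exists k, g, c.
  by split=> //; apply: Or31; split; [right | rewrite kC].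
- move=> kP ns; apply: contrapT => nr; apply: nhc; exists k, g, c.
  by split=> //; apply: Or32.
- move=> st p Hp Ep; apply: contrapT => np; apply: nhc; exists k, g, c.
  by split=> //; apply: Or33; split=> //; exists p.
Qed.

End NoWitness.

Section Geometry.
Variables (R : realType) (n : nat).
Notation vec := 'rV[R]_n.
Variables (Ci Cj : seq (constraint R n)) (Li : seq (gitem R n)) (H : set vec).
Local Notation Pi := (con Ci).
Local Notation Pj := (con Cj).
Hypotheses (Li_gen : gen_list Li = Pi) (Pi0 : Pi !=set0) (Pj0 : Pj !=set0)
  (Pi_H : Pi `<=` H) (Pj_H : Pj `<=` H)
  (H_convex : is_convex H)
  (nw : no_hull_witness Ci Li Pj H).

Lemma gen_dotp_le j c : (j < size Li)%N -> c \in Ci ->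
  dotp (ca c) (gvec Li j) <= bounded_ind R (gknd Li j) * cb c.
Proof.
by move=> jL cC; apply: (@gen_list_item_dotp_le _ _ Li Ci c j _ _ cC jL); rewrite Li_gen.
Qed.

(* a point of [Pi] on a non-strict facet violated by [Pj] is a combination of generators
   on that facet, all of which lie in the closure of [Pj] (or are rays of [Pj]) *)
Lemma saturating_con_le y c : Pi y -> c \in Ci -> ~~ cstrict c -> violates Pj c ->
  dotp (ca c) y = cb c -> con_le Cj y.
Proof.
move=> Py cC ns vc yc c' c'C.
move: Py; rewrite -Li_gen => -[z [z0 _ mass yE]]; rewrite yE in yc *.
apply: gen_list_dotp_le => // j jL zj.
have /saturatesE sat := gen_list_dotp_eq z0 mass (fun j jL => gen_dotp_le jL cC) yc jL zj.
have [ray clo pt _] := nw jL cC sat vc.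
case K: (gknd Li j); rewrite /bounded_ind ?mul0r ?mul1r.
- exact: is_ray_of_dotp_le0 Pj0 (ray K) c'C.
- exact: closure_con_le (pt K ns) _ c'C.
- exact: closure_con_le (clo K) _ c'C.
Qed.

Lemma unsaturated_margin c : c \in Ci ->
  (forall j, (j < size Li)%N -> ~ saturates (gknd Li j) (gvec Li j) c) ->
  exists2 M, M < cb c & forall x, Pi x -> dotp (ca c) x <= M.
Proof.
move=> cC nsat.
pose idx := [seq j <- iota 0 (size Li) | bounded_ind R (gknd Li j) == 1].
have idxP j : (j \in idx) = (j < size Li)%N && (bounded_ind R (gknd Li j) == 1).
  by rewrite mem_filter mem_iota andbC.
have [idx0|idxN] := eqVneq idx [::].
  have [p] := Pi0; rewrite -Li_gen => -[z [_ _ mass _]].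
  move: mass; rewrite big_seq big1 => [/eqP|j]; first by rewrite eq_sym oner_eq0.
  rewrite mem_index_iota => /andP[_ jL]; move: (idxP j); rewrite idx0 in_nil jL /=.
  by rewrite /bounded_ind; case: (gknd Li j); rewrite ?mul0r ?eqxx.
have [js + Hjs] := seq_argmax (fun j => dotp (ca c) (gvec Li j)) idxN.
rewrite idxP => /andP[jsL /eqP bjs].
exists (dotp (ca c) (gvec Li js)).
  have := gen_dotp_le jsL cC; have := nsat js jsL; rewrite saturatesE bjs mul1r.
  by rewrite lt_neqAle => /eqP -> ->.
move=> x; rewrite -Li_gen => -[z [z0 _ mass ->]].
apply: gen_list_dotp_le => // j jL _.
have [bj|bj] : bounded_ind R (gknd Li j) = 0 \/ bounded_ind R (gknd Li j) = 1.
  by rewrite /bounded_ind; case: (gknd Li j); [left|right|right].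
  by have := gen_dotp_le jL cC; rewrite bj !mul0r.
by rewrite bj mul1r; apply: Hjs; rewrite idxP jL bj eqxx.
Qed.

Section Segment.
Variables (u v : vec).
Hypotheses (Pu : Pi u) (Pv : Pj v).

Let w t := (1 - t) *: u + t *: v.
Let viol := [seq c <- Ci | ~~ `[< sat_constraint v c >]].
(* the parameter at which [w] crosses the hyperplane of [c] *)
Let cross_time c := (dotp (ca c) u - cb c) / (dotp (ca c) u - dotp (ca c) v).

Lemma mem_viol c : c \in viol -> c \in Ci /\ ~ sat_constraint v c.
Proof. by rewrite mem_filter => /andP[/asboolPn nv cC]. Qed.

Lemma notin_viol_sat c : c \in Ci -> c \notin viol -> sat_constraint v c.
Proof. by move=> cC; rewrite mem_filter cC andbT negbK => /asboolP. Qed.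

Lemma viol_violates c : c \in viol -> violates Pj c.
Proof. by case/mem_viol => _ nv; exists v. Qed.

Lemma viol_increasing c : c \in viol -> dotp (ca c) u < dotp (ca c) v.
Proof.
case/mem_viol => cC; have := Pu cC; rewrite !sat_constraintE /ineq.
case: cstrict => hu hv; rewrite ltNge; apply/negP => vu; apply: hv.
  exact: le_lt_trans vu hu.
exact: le_trans vu hu.
Qed.

Lemma viol_cross c t : c \in viol ->
  [/\ dotp (ca c) (w t) <= cb c <-> t <= cross_time c,
      dotp (ca c) (w t) < cb c <-> t < cross_time c &
      dotp (ca c) (w (cross_time c)) = cb c].
Proof. by move=> cV; rewrite !dotp_convex; apply: segment_cross; apply: viol_increasing. Qed.

Lemma segment_no_viol : viol = [::] -> forall t, 0 <= t <= 1 -> Pi (w t).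
Proof.
move=> V0 t t01; apply: con_convex => // c cC.
by apply: notin_viol_sat; rewrite ?V0.
Qed.

Section Crossing.
Variable cs : constraint R n.
Hypotheses (csV : cs \in viol) (cs_min : forall c, c \in viol -> cross_time cs <= cross_time c).
Let s := cross_time cs.

Lemma crossing_ge0 : 0 <= s.
Proof.
have [csC _] := mem_viol csV; have := ineqW (Pu csC).
by rewrite /s /cross_time ler_ndivlMr ?mul0r ?subr_lt0 ?viol_increasing // subr_le0.
Qed.

Lemma crossing_le1 : s <= 1.
Proof.
rewrite leNgt; apply/negP => s1; have [_ nv] := mem_viol csV; apply: nv.
have -> : v = w 1 by rewrite /w subrr scale0r add0r scale1r.
have [_ [_ /(_ s1) v_lt] _] := viol_cross 1 csV.
by rewrite sat_constraintE /ineq; case: (cstrict cs) => //; apply: ltW.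
Qed.

Lemma before_crossing t : 0 <= t -> t < s -> Pi (w t).
Proof.
move=> t0 ts c cC; rewrite sat_constraintE.
have [cV|cV] := boolP (c \in viol).
  have [_ [_ /(_ (lt_le_trans ts (cs_min cV))) wt_lt] _] := viol_cross t cV.
  by rewrite /ineq; case: (cstrict c) => //; apply: ltW.
rewrite dotp_convex; apply: ineq_convex; last exact: notin_viol_sat.
  by rewrite t0 (ltW (lt_le_trans ts crossing_le1)).
exact: Pu.
Qed.

Lemma after_crossing t : con_le Cj (w s) -> s < t -> t <= 1 -> Pj (w t).
Proof.
move=> ws st t1 c cC; rewrite sat_constraintE dotp_convex.
apply: (ineq_convex_after crossing_ge0 st t1); last exact: Pv.
by have := ws c cC; rewrite dotp_convex.
Qed.

Lemma crossing_in_Pi : Pi (w s) -> con_le Cj (w s).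
Proof.
move=> Pws; have [csC _] := mem_viol csV; have [_ _ ws] := viol_cross 0 csV.
apply: (saturating_con_le Pws csC) => //; last exact: viol_violates.
by apply/negP => st; have := Pws cs csC; rewrite sat_constraintE ws /ineq st ltxx.
Qed.

Lemma crossing_strict : ~ Pi (w s) ->
  exists2 c, c \in viol & [/\ cstrict c, cross_time c = s & dotp (ca c) (w s) = cb c].
Proof.
move=> nPws; have [c [cC nsat]] : exists c, c \in Ci /\ ~ sat_constraint (w s) c.
  by apply: contrapT => /forallNP h; apply: nPws => c cC; apply: contrapT => /(conj cC)/h.
have cV : c \in viol.
  rewrite mem_filter cC andbT; apply/asboolPn => sv; apply: nsat.
  rewrite sat_constraintE dotp_convex; apply: ineq_convex => //.
    by rewrite crossing_ge0 crossing_le1.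
  exact: Pu.
have [lec ltc wc] := viol_cross s cV; have sc := cs_min cV.
have st : cstrict c.
  apply: contrapT => /negP/negbTE ns; apply: nsat.
  by rewrite sat_constraintE /ineq ns; apply/lec.
have tcs : cross_time c = s.
  apply/eqP; rewrite eq_le sc andbT leNgt; apply/negP => lt; apply: nsat.
  by rewrite sat_constraintE /ineq st; apply/ltc.
by exists c => //; split=> //; rewrite -{1}tcs.
Qed.

(* otherwise points of [Pi] would approach the facet of [c] although [Pi] keeps a margin *)
Lemma crossing_generator c : c \in viol -> cross_time c = s -> 0 < s ->
  exists2 j, (j < size Li)%N & saturates (gknd Li j) (gvec Li j) c.
Proof.
move=> cV tcs s0; apply: contrapT => nsat; have [cC _] := mem_viol cV.
have [M Mc HM] : exists2 M, M < cb c & forall x, Pi x -> dotp (ca c) x <= M.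
  by apply: unsaturated_margin => // j jL sj; apply: nsat; exists j.
set A := dotp (ca c) u; set B := dotp (ca c) v.
have AB : A < B := viol_increasing cV.
set d := (cb c - M) / (2 * (B - A)).
have d0 : 0 < d by rewrite divr_gt0 ?subr_gt0 // mulr_gt0 // subr_gt0.
set t := Num.max 0 (s - d).
have t0 : 0 <= t by rewrite le_max lexx.
have ts : t < s by rewrite gt_max s0 /= ltrBlDr ltrDl.
have := HM _ (before_crossing t0 ts); rewrite dotp_convex -/A -/B.
have e1 : A + s * (B - A) = cb c.
  by have [_ _] := viol_cross 0 cV; rewrite tcs dotp_convex -/A -/B => <-; ring.
have e2 : d * (B - A) = (cb c - M) / 2 by rewrite /d; field; rewrite subr_eq0 gt_eqF.
have e4 : (s - d) * (B - A) <= t * (B - A).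
  by apply: ler_wpM2r; [rewrite subr_ge0 ltW | rewrite le_max lexx orbT].
have -> : (1 - t) * A + t * B = A + t * (B - A) by ring.
lra.
Qed.

Lemma crossing_not_in_Pi : ~ Pi (w s) -> Pj (w s).
Proof.
move=> nPws; have [c cV [st tcs wc]] := crossing_strict nPws.
have s0 : 0 < s.
  rewrite lt_neqAle crossing_ge0 andbT; apply/eqP => s0; apply: nPws.
  by rewrite /w -s0 subr0 scale1r scale0r addr0.
have [j jL sj] := crossing_generator cV tcs s0; have [cC _] := mem_viol cV.
have [_ _ _ strict_in_Pj] := nw jL cC sj (viol_violates cV).
apply: strict_in_Pj st _ _ wc; apply: H_convex; [exact: Pi_H | exact: Pj_H |].
by rewrite crossing_ge0 crossing_le1.
Qed.

Lemma segment_in_union_crossing t : 0 <= t <= 1 -> (Pi `|` Pj) (w t).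
Proof.
move=> /andP[t0 t1]; have [ts|st] := ltP t s; first by left; apply: before_crossing.
have [ws|nws] := pselect (Pi (w s)).
  have [<-|lt] := eqVneq s t; first by left.
  by right; apply: (after_crossing (crossing_in_Pi ws)) => //; rewrite lt_neqAle lt.
have Pws := crossing_not_in_Pi nws.
have [<-|lt] := eqVneq s t; first by right.
by right; apply: (after_crossing (con_sub_con_le Pws)) => //; rewrite lt_neqAle lt.
Qed.

End Crossing.

Lemma segment_in_union t : 0 <= t <= 1 -> (Pi `|` Pj) ((1 - t) *: u + t *: v).
Proof.
have [V0|VN] := eqVneq viol [::]; first by move=> t01; left; apply: segment_no_viol.
have [cs csV cs_min] := seq_argmin cross_time VN.
exact: (segment_in_union_crossing csV cs_min).
Qed.

End Segment.

Section UnionConvex.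
Hypothesis U_convex : is_convex (Pi `|` Pj).

(* along the ray, constraints of [Pi] violated by [Pj] strictly decrease (one it saturates
   would make it a ray of [Pj]) and the others hold from [u] on: far out, we are in [Pi] *)
Lemma union_add_ray u j r : Pj u -> (j < size Li)%N -> gknd Li j = GRay -> 0 <= r ->
  (Pi `|` Pj) (u + r *: gvec Li j).
Proof.
move=> Pu jL kR r0.
have [[_ ray]|nray] := pselect (is_ray_of Pj (gvec Li j)); first by right; apply: ray.
have far c : c \in Ci -> exists r1, forall rho, r1 <= rho ->
    sat_constraint (u + rho *: gvec Li j) c.
  move=> cC; have := gen_dotp_le jL cC; rewrite kR /bounded_ind mul0r => g0.
  have [vc|nvc] := pselect (violates Pj c).
    have gneg : dotp (ca c) (gvec Li j) < 0.
      rewrite lt_neqAle g0 andbT; apply/eqP => g0'; apply: nray.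
      have sj : saturates (gknd Li j) (gvec Li j) c by rewrite kR.
      by have [+ _ _ _] := nw jL cC sj vc; apply.
    have [r1 Hr1] := ray_eventually_lt (dotp (ca c) u) (cb c) gneg.
    exists r1 => rho /Hr1; rewrite sat_constraintE dotpDr dotpZr /ineq.
    by case: (cstrict c) => //; apply: ltW.
  have uc : sat_constraint u c by apply: contrapT => nu; apply: nvc; exists u.
  exists 0 => rho rho0; rewrite sat_constraintE dotpDr dotpZr.
  by apply: le_ineq_trans uc; rewrite gerDl mulr_ge0_le0.
have [r1 Hr1] := eventually_seq far; set r2 := Num.max r1 1.
have Pi_r2 : Pi (u + r2 *: gvec Li j) by move=> c cC; apply: Hr1 => //; rewrite le_max lexx.
have [r2r|rr2] := leP r2 r.
  by left => c cC; apply: Hr1 => //; apply: le_trans r2r; rewrite le_max lexx.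
have r2_gt0 : 0 < r2 by rewrite lt_max ltr01 orbT.
have := U_convex (or_intror Pu) (or_introl Pi_r2) (t := r / r2).
rewrite convex_comb_ray divfK ?gt_eqF //; apply; rewrite divr_ge0 ?(ltW r2_gt0) //=.
by rewrite ler_pdivrMr // mul1r ltW.
Qed.

Lemma union_toward_closure u j t : Pj u -> (j < size Li)%N -> gknd Li j = GClosure ->
  0 <= t -> t < 1 -> (Pi `|` Pj) ((1 - t) *: u + t *: gvec Li j).
Proof.
move=> Pu jL kC t0 t1.
have [gj|ngj] := pselect (con_le Cj (gvec Li j)); first by right; apply: con_toward_con_le.
have ncl : ~ closure Pj (gvec Li j) by move/closure_con_le.
have near c : c \in Ci -> exists2 t0, t0 < 1 & forall t', t0 <= t' -> t' < 1 ->
    sat_constraint ((1 - t') *: u + t' *: gvec Li j) c.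
  move=> cC; have := gen_dotp_le jL cC; rewrite kC /bounded_ind mul1r => gc.
  have [vc|nvc] := pselect (violates Pj c).
    have glt : dotp (ca c) (gvec Li j) < cb c.
      rewrite lt_neqAle gc andbT; apply/eqP => gc'; apply: ncl.
      have sj : saturates (gknd Li j) (gvec Li j) c by rewrite kC.
      by have [_ + _ _] := nw jL cC sj vc; apply.
    have [t2 t21 Ht2] := segment_end_lt (dotp (ca c) u) glt.
    exists t2 => // t' /Ht2 /[apply]; rewrite sat_constraintE dotp_convex /ineq.
    by case: (cstrict c) => //; apply: ltW.
  have uc : sat_constraint u c by apply: contrapT => nu; apply: nvc; exists u.
  by exists 0 => // t' t'0 t'1; apply: sat_toward.
have [t2 t21 Ht2] := eventually_seq_lt1 near; set t3 := Num.max t2 0.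
have t31 : t3 < 1 by rewrite gt_max t21 ltr01.
have Pi_t3 : Pi ((1 - t3) *: u + t3 *: gvec Li j).
  by move=> c cC; apply: Ht2 => //; rewrite le_max lexx.
have [t3t|tt3] := leP t3 t.
  by left => c cC; apply: Ht2 => //; apply: le_trans t3t; rewrite le_max lexx.
have t3_gt0 : 0 < t3 by apply: le_lt_trans tt3.
have := U_convex (or_intror Pu) (or_introl Pi_t3) (t := t / t3).
rewrite convex_comb_comb divfK ?gt_eqF //; apply; rewrite divr_ge0 ?(ltW t3_gt0) //=.
by rewrite ler_pdivrMr // mul1r ltW.
Qed.

Lemma union_gen_closed : gen_closed Li (Pi `|` Pj).
Proof.
split=> j jL kj.
- move=> u r [Pu|Pu] r0; last exact: union_add_ray.
  by left; rewrite -Li_gen; apply: gen_list_add_ray => //; rewrite Li_gen.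
- move=> u t [Pu|Pu] t0 t1; last exact: union_toward_closure.
  by left; rewrite -Li_gen; apply: gen_list_toward_closure => //; rewrite Li_gen.
- by left; rewrite -Li_gen; apply: gen_list_point.
Qed.

End UnionConvex.

End Geometry.

Section PolyHull.
Variables (R : realType) (n : nat).
Notation vec := 'rV[R]_n.
Implicit Types (A B : set vec).

Lemma poly_hullC A B : poly_hull A B = poly_hull B A.
Proof. by apply/seteqP; split=> x Hx Q NQ sub; apply: Hx => //; rewrite setUC. Qed.

Lemma poly_hull_convex A B : is_convex (poly_hull A B).
Proof.
move=> u v t Hu Hv t01 Q [C [wfC ->]] sub.
by apply: con_convex => //; [apply: (Hu (con C)) | apply: (Hv (con C))] => //; exists C.
Qed.

Lemma poly_hullUl A B : A `<=` poly_hull A B.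
Proof. by move=> x Ax Q _ sub; apply: sub; left. Qed.

Lemma poly_hullUr A B : B `<=` poly_hull A B.
Proof. by move=> x Bx Q _ sub; apply: sub; right. Qed.

Variables (L : seq (gitem R n)) (B : set vec).
Hypothesis L0 : gen_list L !=set0.

Lemma poly_hull_add_ray j q r : (j < size L)%N -> gknd L j = GRay -> B q -> 0 <= r ->
  poly_hull (gen_list L) B (q + r *: gvec L j).
Proof.
move=> jL kR Bq r0 Q [C [_ ->]] sub c cC.
have := gen_list_item_dotp_le L0 (fun x Lx => sub x (or_introl Lx)) cC jL.
rewrite kR /bounded_ind mul0r => g0; rewrite sat_constraintE dotpDr dotpZr.
apply: le_ineq_trans (sub q (or_intror Bq) c cC).
by rewrite gerDl mulr_ge0_le0.
Qed.

Lemma poly_hull_from_closure j q t : (j < size L)%N -> gknd L j = GClosure -> B q ->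
  0 < t <= 1 -> poly_hull (gen_list L) B ((1 - t) *: gvec L j + t *: q).
Proof.
move=> jL kC Bq /andP[t0 t1] Q [C [_ ->]] sub c cC.
have := gen_list_item_dotp_le L0 (fun x Lx => sub x (or_introl Lx)) cC jL.
rewrite kC /bounded_ind mul1r => gc.
have -> : (1 - t) *: gvec L j + t *: q = (1 - (1 - t)) *: q + (1 - t) *: gvec L j.
  by rewrite addrC; congr (_ *: _ + _); ring.
by apply: (sat_toward (sub q (or_intror Bq) c cC) gc); rewrite ?subr_ge0 // ltrBlDr ltrDl.
Qed.

End PolyHull.

Section HullWitness.
Variables (R : realType) (n : nat).
Notation vec := 'rV[R]_n.
Variables (Ci Cj : seq (constraint R n)) (Gi : gensys R n) (H : set vec).
Local Notation Pi := (con Ci).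
Local Notation Pj := (con Cj).
Local Notation Li := (gen_items Gi).
Hypotheses (Li_gen : gen_list Li = Pi) (wf_Gi : wf_gensys Gi)
  (H_convex : is_convex H) (Pi_H : Pi `<=` H) (Pj_H : Pj `<=` H)
  (H_ray : forall j q r, (j < size Li)%N -> gknd Li j = GRay -> Pj q -> 0 <= r ->
     H (q + r *: gvec Li j))
  (H_closure : forall j q t, (j < size Li)%N -> gknd Li j = GClosure -> Pj q ->
     0 < t <= 1 -> H ((1 - t) *: gvec Li j + t *: q)).

(* close to [g] the segment is outside [Pj], and beyond the facet of [b] through [g] *)
Lemma witness_near g q b : b \in Ci -> dotp (ca b) g = cb b -> Pj q -> ~ sat_constraint q b ->
  ~ closure Pj g -> (forall t, 0 < t <= 1 -> H ((1 - t) *: g + t *: q)) ->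
  exists x, H x /\ ~ (Pi `|` Pj) x.
Proof.
move=> bC gb Pq nq ncl Hseg; have [e e0 He] := not_closureP ncl.
set d := `|g - q| + 1; have d0 : 0 < d by rewrite ltr_wpDl.
set t := Num.min 1 (e / (2 * d)).
have t0 : 0 < t by rewrite lt_min ltr01 divr_gt0 // mulr_gt0.
have t1 : t <= 1 by rewrite ge_min lexx.
exists ((1 - t) *: g + t *: q); split; first by apply: Hseg; rewrite t0.
case=> [Pix|Pjx].
  move: nq (Pix b bC); rewrite !sat_constraintE dotp_convex gb /ineq.
  by case: (cstrict b) => /negP; rewrite -?leNgt -?ltNge; nra.
apply: (He _ _ Pjx).
have -> : g - ((1 - t) *: g + t *: q) = t *: (g - q).
  by rewrite scalerBr scalerBl scale1r opprD opprB addrA addrCA subrr addr0.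
rewrite normrZ gtr0_norm //.
have h1 : t <= e / (2 * d) by rewrite ge_min lexx orbT.
have h2 : `|g - q| <= d by rewrite /d lerDl.
have h3 : t * `|g - q| <= e / (2 * d) * d by apply: ler_pM => //; apply: ltW.
have h4 : e / (2 * d) * d = e / 2 by field; rewrite gt_eqF.
lra.
Qed.

(* far along a ray of [Gi] that is not a ray of [Pj], some constraint of [Pj] fails *)
Lemma witness_ray j b : (j < size Li)%N -> gknd Li j = GRay -> b \in Ci ->
  dotp (ca b) (gvec Li j) = 0 -> violates Pj b -> ~ is_ray_of Pj (gvec Li j) ->
  exists x, H x /\ ~ (Pi `|` Pj) x.
Proof.
move=> jL kR bC gb [q [Pq nq]] nray; set g := gvec Li j.
have g0 : g != 0.
  by apply/negP => /eqP g0; move: wf_Gi (nth_gen_items jL); rewrite kR /wf_gensys -/g g0 => /negP.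
have [p [rho [Pp [rho0 nP]]]] : exists p rho, Pj p /\ 0 <= rho /\ ~ Pj (p + rho *: g).
  apply: contrapT => h; apply: nray; split=> // p' rho' Pp' r0'.
  by apply: contrapT => h'; apply: h; exists p', rho'.
have [c [cC nsc]] : exists c, c \in Cj /\ ~ sat_constraint (p + rho *: g) c.
  apply: contrapT => h; apply: nP => c cC.
  by apply: contrapT => h'; apply: h; exists c.
have g_pos : 0 < dotp (ca c) g.
  rewrite ltNge; apply/negP => gle; apply: nsc; rewrite sat_constraintE dotpDr dotpZr.
  by apply: le_ineq_trans (Pp c cC); rewrite gerDl mulr_ge0_le0.
have [r r0 Hr] := ray_beyond (dotp (ca c) q) (cb c) g_pos.
exists (q + r *: g); split; first exact: H_ray.
case=> [Pix|Pjx].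
  by apply: nq; have := Pix b bC; rewrite !sat_constraintE dotpDr dotpZr gb mulr0 addr0.
have := ineqW (Pjx c cC); rewrite dotpDr dotpZr => h.
by have := Hr r (lexx r); rewrite ltNge h.
Qed.

Lemma hull_witness : hull_cond Pi Ci Gi Pj H -> exists x, H x /\ ~ (Pi `|` Pj) x.
Proof.
move=> [k [g [b [ing bC sat [q [Pq nq]] cases]]]].
have [j jL Ej] := in_gen_items ing.
have gE : gvec Li j = g by rewrite Ej.
have kE : gknd Li j = k by rewrite Ej.
case: cases => [[[kR|kC] ns]|[kP [nsb ncl]]|[stb [p [Hp [nPj sp]]]]].
- rewrite kR -gE in sat ns; apply: witness_ray bC sat _ ns; rewrite ?kE //.
  by exists q.
- rewrite kC in sat ns; apply: (witness_near bC sat Pq nq ns) => t t01.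
  by rewrite -gE; apply: H_closure; rewrite ?kE.
- rewrite kP in sat; apply: (witness_near bC sat Pq nq ncl) => t /andP[t0 t1].
  apply: H_convex; [apply: Pi_H | exact: Pj_H | by rewrite ltW].
  by rewrite -Li_gen -gE; apply: gen_list_point; rewrite ?kE.
exists p; split=> //; case=> [Pip|//].
by have := Pip b bC; rewrite sat_constraintE sp /ineq stb ltxx.
Qed.

End HullWitness.

Section Main.
Variables (R : realType) (n : nat).
Notation vec := 'rV[R]_n.
Variables (C1 C2 : seq (constraint R n)) (G1 G2 : gensys R n).
Local Notation P1 := (con C1).
Local Notation P2 := (con C2).
Local Notation L1 := (gen_items G1).
Local Notation L2 := (gen_items G2).
Hypotheses (L1_gen : gen_list L1 = P1) (L2_gen : gen_list L2 = P2)
  (P10 : P1 !=set0) (P20 : P2 !=set0) (wf1 : wf_gensys G1).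

Lemma hull_cond_witness : hull_cond P1 C1 G1 P2 (poly_hull P1 P2) ->
  exists x, poly_hull P1 P2 x /\ ~ (P1 `|` P2) x.
Proof.
have L10 : gen_list L1 !=set0 by rewrite L1_gen.
apply: (hull_witness L1_gen wf1 (@poly_hull_convex _ _ P1 P2)).
- exact: poly_hullUl.
- exact: poly_hullUr.
- by move=> j q r jL kR Pq r0; rewrite -L1_gen; apply: poly_hull_add_ray.
- by move=> j q t jL kC Pq t01; rewrite -L1_gen; apply: poly_hull_from_closure.
Qed.

Section WithoutWitness.
Hypotheses (nw1 : no_hull_witness C1 L1 P2 (poly_hull P1 P2))
           (nw2 : no_hull_witness C2 L2 P1 (poly_hull P1 P2)).

Lemma union_convex : is_convex (P1 `|` P2).
Proof.
have H_convex := @poly_hull_convex _ _ P1 P2.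
move=> u v t [P1u|P2u] [P1v|P2v] t01.
- by left; apply: con_convex.
- exact: (segment_in_union L1_gen P10 P20 (@poly_hullUl _ _ P1 P2) (@poly_hullUr _ _ P1 P2)
    H_convex nw1 P1u P2v t01).
- rewrite setUC.
  exact: (segment_in_union L2_gen P20 P10 (@poly_hullUr _ _ P1 P2) (@poly_hullUl _ _ P1 P2)
    H_convex nw2 P2u P1v t01).
- by right; apply: con_convex.
Qed.

Lemma gen_list_cat_sub_union : gen_list (L1 ++ L2) `<=` P1 `|` P2.
Proof.
apply: gen_list_ind union_convex _; apply: gen_closed_cat.
  exact: (union_gen_closed L1_gen P10 nw1 union_convex).
by rewrite setUC; apply: (union_gen_closed L2_gen P20 nw2); rewrite setUC; exact: union_convex.
Qed.

Lemma poly_hull_eq_union : poly_hull P1 P2 = P1 `|` P2.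
Proof.
apply/seteqP; split=> [x Hx|x [P1x|P2x]]; last 2 first.
- exact: poly_hullUl.
- exact: poly_hullUr.
apply: gen_list_cat_sub_union; apply: Hx.
  by apply: gen_list_NNC; have [x0 P1x0] := P10; exists x0; apply: gen_list_catl; rewrite L1_gen.
by move=> y [P1y|P2y]; [apply: gen_list_catl | apply: gen_list_catr]; rewrite ?L1_gen ?L2_gen.
Qed.

End WithoutWitness.

End Main.

Unset Implicit Arguments.

Theorem theorem4 (R : realType) (n : nat)
  (P1 P2 : set 'rV[R]_n) (C1 C2 : seq (constraint R n)) (G1 G2 : gensys R n) :
  (forall c, c \in C1 -> wf_constraint c) ->
  (forall c, c \in C2 -> wf_constraint c) ->
  wf_gensys G1 -> wf_gensys G2 ->
  P1 = con C1 -> P1 = gen G1 ->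
  P2 = con C2 -> P2 = gen G2 ->
  P1 !=set0 -> P2 !=set0 ->
  (poly_hull P1 P2 <> P1 `|` P2 <->
   hull_cond P1 C1 G1 P2 (poly_hull P1 P2) \/
   hull_cond P2 C2 G2 P1 (poly_hull P1 P2)).
Proof.
move=> _ _ wf1 wf2 -> gen1 -> gen2 P10 P20.
have L1_gen : gen_list (gen_items G1) = con C1 by rewrite -gen_list_gen_items gen1.
have L2_gen : gen_list (gen_items G2) = con C2 by rewrite -gen_list_gen_items gen2.
split=> [hull_ne|[hc|hc]].
- apply: contrapT => /not_orP[nc1 nc2]; apply: hull_ne.
  exact: (poly_hull_eq_union L1_gen L2_gen P10 P20
    (not_hull_cond_no_witness nc1) (not_hull_cond_no_witness nc2)).
- have [x [Hx nU]] := hull_cond_witness L1_gen P10 wf1 hc.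
  by move=> E; apply: nU; rewrite -E.
- rewrite poly_hullC in hc; have [x [Hx nU]] := hull_cond_witness L2_gen P20 wf2 hc.
  by rewrite poly_hullC setUC => E; apply: nU; rewrite -E.
Qed.
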